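(* Let $\alpha\in(1,2)$, $\sigma=1-\alpha/2$, $T>0$, $N$ a positive integer, $\tau=T/N$, $t_j=j\tau$ and $t_{k+\sigma}=t_k+\sigma\tau$. Let $k\in\{1,2,\dots,N-1\}$ and suppose $p\in C^{4}[t_0,t_{k+1}]$. Define $$r_k={}_C\mathrm{D}_{0,t}^\alpha p(t)\big|_{t=t_{k+\sigma}}-\mathcal{D}p(t)\big|_{t=t_{k+\sigma}},\qquad \mathcal{D}p(t)\big|_{t=t_{k+\sigma}}=\frac{1}{\Gamma(2-\alpha)}\sum_{l=0}^{k}c_l^{(k,\alpha)}\,\delta_t^2p^{k-l}.$$ Then $$|r_k|\leq\frac{1}{\Gamma(3-\alpha)}\max_{t_0\leq t\leq t_{k+1}}|p^{(4)}(t)|\Big[\frac{5\,t_{k+\sigma}^{2-\alpha}}{6}\tau^2-\frac{5}{8}\Big(\sigma+\frac{1}{2}\Big)^{2-\alpha}\tau^{4-\alpha}\Big].$$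
   Context: For $\alpha\in(1,2)$ the Caputo derivative is ${}_C\mathrm{D}_{0,t}^\alpha p(t)=\frac{1}{\Gamma(2-\alpha)}\int_0^t p''(s)(t-s)^{1-\alpha}\,\mathrm{d}s$. Write $p^j=p(t_j)$, $\delta_tp^{j-\frac12}=(p^j-p^{j-1})/\tau$, $\delta_t^2p^0=\frac{2}{\tau}\big[\delta_tp^{\frac12}-p'(t_0)\big]$, and $\delta_t^2p^j=(\delta_tp^{j+\frac12}-\delta_tp^{j-\frac12})/\tau$ for $j\ge1$. For integers $k\ge1$ define $a_1^{(k,\alpha)}=\frac32\tau^{2-\alpha}\int_0^{1/2}(s-\frac13)(k+\sigma-s)^{1-\alpha}\,\mathrm{d}s$; $a_l^{(k,\alpha)}=\tau^{2-\alpha}\int_0^1(s-\frac12)(k+\sigma-l+\frac32-s)^{1-\alpha}\,\mathrm{d}s$ for $2\le l\le k$; $b_l^{(k,\alpha)}=\tau^{2-\alpha}\int_0^1(\frac32-s)(k+\sigma-l+\frac12-s)^{1-\alpha}\,\mathrm{d}s$ for $1\le l\le k-1$; $b_k^{(k,\alpha)}=\tau^{2-\alpha}\int_0^{\sigma+1/2}s^{1-\alpha}\,\mathrm{d}s$; $c_l^{(k,\alpha)}=a_{k-l}^{(k,\alpha)}+b_{k-l}^{(k,\alpha)}$ for $0\le l\le k-1$, and $c_k^{(k,\alpha)}=\frac32\tau^{2-\alpha}\int_0^{1/2}(1-s)(k+\sigma-s)^{1-\alpha}\,\mathrm{d}s$. *)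

From Stdlib Require Import Reals.
From Coquelicot Require Import Coquelicot.
Open Scope R_scope.

Definition Gamma (z : R) : R :=
  RInt_gen (fun x => Rpower x (z - 1) * exp (- x)) (at_right 0) (Rbar_locally p_infty).

Definition deriv_on (a b : R) (f f' : R -> R) : Prop :=
  forall t, a <= t <= b ->
    filterlim (fun h => (f (t + h) - f t) / h)
      (within (fun h => h <> 0 /\ a <= t + h <= b) (locally 0))
      (locally (f' t)).

Definition cont_on (a b : R) (f : R -> R) : Prop :=
  forall t, a <= t <= b ->
    filterlim f (within (fun x => a <= x <= b) (locally t)) (locally (f t)).

Definition C4_on (a b : R) (p p1 p2 p3 p4 : R -> R) : Prop :=
  deriv_on a b p p1 /\ deriv_on a b p1 p2 /\ deriv_on a b p2 p3 /\
  deriv_on a b p3 p4 /\ cont_on a b p4.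

(** max_{a<=t<=b} |g t| (taken as the supremum, attained for continuous g) *)
Definition max_abs_on (a b : R) (g : R -> R) : R :=
  real (Lub_Rbar (fun y => exists t, a <= t <= b /\ y = Rabs (g t))).

Definition caputo (alpha : R) (p2 : R -> R) (t : R) : R :=
  / Gamma (2 - alpha) *
  RInt_gen (fun s => p2 s * Rpower (t - s) (1 - alpha)) (at_point 0) (at_left t).

Definition sigma_of (alpha : R) : R := 1 - alpha / 2.

Definition coef_a (alpha tau : R) (k l : nat) : R :=
  let sg := sigma_of alpha in
  if Nat.eqb l 1 then
    3 / 2 * Rpower tau (2 - alpha) *
    RInt (fun s => (s - 1 / 3) * Rpower (INR k + sg - s) (1 - alpha)) 0 (1 / 2)
  else
    Rpower tau (2 - alpha) *
    RInt (fun s => (s - 1 / 2) * Rpower (INR k + sg - INR l + 3 / 2 - s) (1 - alpha)) 0 1.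

Definition coef_b (alpha tau : R) (k l : nat) : R :=
  let sg := sigma_of alpha in
  if Nat.eqb l k then
    Rpower tau (2 - alpha) *
    RInt_gen (fun s => Rpower s (1 - alpha)) (at_right 0) (at_point (sg + 1 / 2))
  else
    Rpower tau (2 - alpha) *
    RInt (fun s => (3 / 2 - s) * Rpower (INR k + sg - INR l + 1 / 2 - s) (1 - alpha)) 0 1.

Definition coef_c (alpha tau : R) (k l : nat) : R :=
  let sg := sigma_of alpha in
  if Nat.ltb l k then coef_a alpha tau k (k - l) + coef_b alpha tau k (k - l)
  else
    3 / 2 * Rpower tau (2 - alpha) *
    RInt (fun s => (1 - s) * Rpower (INR k + sg - s) (1 - alpha)) 0 (1 / 2).

(** delta_t p^{j-1/2} = (p^j - p^{j-1})/tau, grid t_j = j tau *)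
Definition dt (p : R -> R) (tau : R) (j : nat) : R :=
  (p (INR j * tau) - p (INR (j - 1) * tau)) / tau.

(** delta_t^2 p^j; dp0 = p'(t_0) *)
Definition dt2 (p : R -> R) (dp0 tau : R) (j : nat) : R :=
  match j with
  | O => 2 / tau * (dt p tau 1 - dp0)
  | S _ => (dt p tau (j + 1) - dt p tau j) / tau
  end.

Definition discrete_caputo (alpha tau : R) (p : R -> R) (dp0 : R) (k : nat) : R :=
  / Gamma (2 - alpha) *
  sum_f_R0 (fun l => coef_c alpha tau k l * dt2 p dp0 tau (k - l)) k.

(* Split the Caputo integral at t_{k+sigma} into the pieces [0, t_{1/2}],
   [t_{j-3/2}, t_{j-1/2}] (2 <= j <= k) and [t_{k-1/2}, t_{k+sigma}].  After the substitution
   u = t_{j-3/2} + s tau the coefficients a, b, c are kernel moments of hat functions, so on every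
   piece but the last the discrete operator is the kernel integral of the linear interpolant of
   the second differences (through t_{j-1}, t_j; on the first piece through tau/3, tau, since
   delta_t^2 p^0 = p''(0) + p'''(0) tau/3 + O(tau^2)).  Taylor's formula gives
   |delta_t^2 p^j - p''(t_j)| <= M tau^2/12, hence an interpolation error of at most
   (5/6) M tau^2.  On the last piece b_k delta_t^2 p^k is the kernel integral of a constant; the
   linear Taylor term of p'' at t_k integrates to zero there because sigma = 1 - alpha/2, which
   leaves (1/8 + 1/12) M tau^2 = (5/24) M tau^2.  The kernel masses are
   (t_{k+sigma}^{2-alpha} - ((sigma + 1/2) tau)^{2-alpha}) / (2 - alpha) before t_{k-1/2} and
   ((sigma + 1/2) tau)^{2-alpha} / (2 - alpha) after it, and 5/6 - 5/24 = 5/8; finally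
   Gamma(3 - alpha) = (2 - alpha) Gamma(2 - alpha). *)

From Stdlib Require Import Reals Lra Lia.
From Coquelicot Require Import Coquelicot.
Open Scope R_scope.

(** * Elementary limits and derivatives *)

Lemma is_derive_continuous (f : R -> R) x l : is_derive f x l -> continuous f x.
Proof.
  intros H.
  exact (ex_derive_continuous (K := R_AbsRing) (V := R_NormedModule) f x (ex_intro _ l H)).
Qed.

Lemma Rpower_pos x y : 0 < Rpower x y.
Proof. apply exp_pos. Qed.

Lemma is_derive_Rpower x y : 0 < x -> is_derive (fun t => Rpower t y) x (y * Rpower x (y - 1)).
Proof. intros Hx. apply is_derive_Reals, derivable_pt_lim_power, Hx. Qed.

Lemma is_derive_Rpower_sub K g s : s < K ->
  is_derive (fun t => Rpower (K - t) g) s (- (g * Rpower (K - s) (g - 1))).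
Proof.
  intros Hs.
  replace (- (g * Rpower (K - s) (g - 1))) with (scal (-1) (g * Rpower (K - s) (g - 1)))
    by (change (-1 * (g * Rpower (K - s) (g - 1)) = - (g * Rpower (K - s) (g - 1))); ring).
  apply (is_derive_comp (fun y => Rpower y g) (fun t => K - t)).
  - apply is_derive_Rpower. lra.
  - auto_derive; auto; ring.
Qed.

Lemma continuous_Rpower_sub K g s : s < K -> continuous (fun t => Rpower (K - t) g) s.
Proof. intros Hs. eapply is_derive_continuous, is_derive_Rpower_sub, Hs. Qed.

Lemma filterlim_mult_0 {T} (F : (T -> Prop) -> Prop) {FF : Filter F} (f : T -> R) c :
  filterlim f F (locally 0) -> filterlim (fun x => c * f x) F (locally 0).
Proof.
  intros H. rewrite <- (Rmult_0_r c).
  exact (filterlim_comp _ _ _ f (fun y => c * y) _ _ _ H (filterlim_scal_r (K := R_AbsRing) c 0)).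
Qed.

Lemma filterlim_Rpower_0 g : 0 < g -> filterlim (fun u => Rpower u g) (at_right 0) (locally 0).
Proof.
  intros Hg. unfold Rpower.
  apply (filterlim_comp _ _ _ (fun u => g * ln u) exp _ (Rbar_locally m_infty));
    [|exact is_lim_exp_m].
  eapply filterlim_comp; [exact is_lim_ln_0|].
  assert (H := is_lim_scal_l (fun y => y) g m_infty m_infty (is_lim_id m_infty)).
  replace (Rbar_mult g m_infty) with m_infty in H; [exact H|].
  simpl. destruct Rle_dec; [|lra]. destruct Rle_lt_or_eq_dec; [reflexivity|lra].
Qed.

Lemma filterlim_sub_at_left c : filterlim (fun u => c - u) (at_left c) (at_right 0).
Proof.
  intros P [e He]. exists e. intros u Hu Huc. apply He; [|lra].
  change (Rabs (c - u - 0) < e). change (Rabs (u - c) < e) in Hu.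
  rewrite Rminus_0_r, <- Rabs_Ropp. now replace (- (c - u)) with (u - c) by ring.
Qed.

Lemma at_left_between lo c : lo < c -> at_left c (fun u => lo < u < c).
Proof.
  intros Hlo. exists (mkposreal _ (proj2 (Rlt_0_minus lo c) Hlo)). intros y Hy Hyc.
  change (Rabs (y - c) < c - lo) in Hy. destruct (Rabs_def2 _ _ Hy). lra.
Qed.

Lemma filterlim_Rpower_sub c g : 0 < g ->
  filterlim (fun u => Rpower (c - u) g) (at_left c) (locally 0).
Proof.
  intros Hg.
  apply (filterlim_comp _ _ _ (fun u => c - u) (fun y => Rpower y g) _ (at_right 0)).
  - apply filterlim_sub_at_left.
  - now apply filterlim_Rpower_0.
Qed.

Lemma filterlim_exp_opp : filterlim (fun x => exp (- x)) (Rbar_locally p_infty) (locally 0).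
Proof.
  eapply filterlim_comp; [|exact is_lim_exp_m].
  exact (is_lim_opp (fun y => y) p_infty p_infty (is_lim_id p_infty)).
Qed.

(** * Functions on a closed interval *)

Lemma deriv_on_is_derive a b f f' t : deriv_on a b f f' -> a < t < b -> is_derive f t (f' t).
Proof.
  intros H Ht. apply is_derive_Reals. intros eps Heps.
  specialize (H t ltac:(lra)). rewrite filterlim_locally in H.
  destruct (H (mkposreal eps Heps)) as [d Hd].
  assert (Hd' : 0 < Rmin d (Rmin (t - a) (b - t))).
  { apply Rmin_pos; [apply cond_pos|apply Rmin_pos; lra]. }
  exists (mkposreal _ Hd'). intros h Hh0 Hh. simpl in Hh.
  assert (Hm := Rmin_r d (Rmin (t - a) (b - t))).
  assert (Hm1 := Rmin_l (t - a) (b - t)). assert (Hm2 := Rmin_r (t - a) (b - t)).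
  destruct (Rabs_def2 h _ Hh).
  apply (Hd h).
  - change (Rabs (h - 0) < d). rewrite Rminus_0_r.
    eapply Rlt_le_trans; [exact Hh|apply Rmin_l].
  - split; [exact Hh0|lra].
Qed.

Lemma deriv_on_cont_on a b f f' : deriv_on a b f f' -> cont_on a b f.
Proof.
  intros H t Ht. specialize (H t Ht). rewrite filterlim_locally in H.
  destruct (H (mkposreal 1 Rlt_0_1)) as [d Hd].
  apply filterlim_locally. intros eps.
  assert (Hf' : 0 < Rabs (f' t) + 1) by (generalize (Rabs_pos (f' t)); lra).
  assert (Hp : 0 < Rmin d (eps / (Rabs (f' t) + 1))).
  { apply Rmin_pos; [apply cond_pos|apply Rdiv_lt_0_compat; [apply cond_pos|lra]]. }
  exists (mkposreal _ Hp). intros x Hx Hxab. change R in x.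
  change (Rabs (x - t) < Rmin d (eps / (Rabs (f' t) + 1))) in Hx.
  change (Rabs (f x - f t) < eps).
  destruct (Req_dec x t) as [->|Hne]; [rewrite Rminus_diag, Rabs_R0; apply cond_pos|].
  set (q := (f x - f t) / (x - t)).
  assert (Hq : Rabs (q - f' t) < 1).
  { assert (Hb : ball 0 d (x - t)).
    { change (Rabs (x - t - 0) < d). rewrite Rminus_0_r.
      eapply Rlt_le_trans; [exact Hx|apply Rmin_l]. }
    assert (Hdom : x - t <> 0 /\ a <= t + (x - t) <= b).
    { split; [now apply Rminus_eq_contra|]. now replace (t + (x - t)) with x by ring. }
    specialize (Hd (x - t) Hb Hdom).
    change (Rabs ((f (t + (x - t)) - f t) / (x - t) - f' t) < 1) in Hd.
    now replace (t + (x - t)) with x in Hd by ring. }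
  assert (Hqb : Rabs q < Rabs (f' t) + 1).
  { replace q with ((q - f' t) + f' t) by ring. eapply Rle_lt_trans; [apply Rabs_triang|lra]. }
  assert (Hxt : Rabs (x - t) * (Rabs (f' t) + 1) < eps).
  { apply (Rmult_lt_reg_r (/ (Rabs (f' t) + 1))); [apply Rinv_0_lt_compat; lra|].
    rewrite Rmult_assoc, Rinv_r, Rmult_1_r by lra.
    eapply Rlt_le_trans; [exact Hx|apply Rmin_r]. }
  replace (f x - f t) with (q * (x - t)) by (unfold q; field; lra).
  rewrite Rabs_mult. generalize (Rabs_pos q) (Rabs_pos (x - t)). nra.
Qed.

Lemma cont_on_of_continuous a b f : (forall x, continuous f x) -> cont_on a b f.
Proof.
  intros H t _. eapply filterlim_filter_le_1; [|apply H].
  intros P [e He]. exists e. intros y Hy _. now apply He.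
Qed.

Lemma cont_on_subinterval a b a' b' f : cont_on a b f -> a <= a' -> b' <= b -> cont_on a' b' f.
Proof.
  intros H Ha Hb t Ht. eapply filterlim_filter_le_1; [|apply H; lra].
  intros P [e He]. exists e. intros y Hy Hd. apply He; auto. lra.
Qed.

Lemma cont_on_plus a b f g : cont_on a b f -> cont_on a b g -> cont_on a b (fun x => f x + g x).
Proof.
  intros Hf Hg t Ht.
  apply (filterlim_comp_2 f g Rplus (Hf t Ht) (Hg t Ht) (filterlim_plus (f t) (g t))).
Qed.

Lemma cont_on_opp a b f : cont_on a b f -> cont_on a b (fun x => - f x).
Proof.
  intros Hf t Ht. exact (filterlim_comp _ _ _ f Ropp _ _ _ (Hf t Ht) (filterlim_opp (f t))).
Qed.

(* Clamping the argument turns a function continuous on [a, b] into one continuous on R,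
   as Coquelicot's integration and mean value theorems require. *)
Definition extend_on (a b : R) (f : R -> R) (x : R) : R := f (Rmax a (Rmin b x)).

Lemma clamp_between a b x : a <= b -> a <= Rmax a (Rmin b x) <= b.
Proof. intros Hab. unfold Rmax, Rmin. repeat destruct Rle_dec; lra. Qed.

Lemma clamp_id a b x : a <= x <= b -> Rmax a (Rmin b x) = x.
Proof. intros Hx. unfold Rmax, Rmin. repeat destruct Rle_dec; lra. Qed.

Lemma clamp_lipschitz a b x y : a <= b ->
  Rabs (Rmax a (Rmin b x) - Rmax a (Rmin b y)) <= Rabs (x - y).
Proof.
  intros Hab. unfold Rmax, Rmin.
  repeat destruct Rle_dec; unfold Rabs; repeat destruct Rcase_abs; lra.
Qed.

Lemma extend_on_eq a b f x : a <= x <= b -> extend_on a b f x = f x.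
Proof. intros Hx. unfold extend_on. now rewrite clamp_id. Qed.

Lemma extend_on_continuous a b f : a <= b -> cont_on a b f ->
  forall x, continuous (extend_on a b f) x.
Proof.
  intros Hab H x. unfold extend_on.
  assert (Hy := clamp_between a b x Hab).
  specialize (H _ Hy). rewrite filterlim_locally in H.
  apply filterlim_locally. intros eps. destruct (H eps) as [d Hd].
  exists d. intros z Hz. apply Hd; [|now apply clamp_between].
  change (Rabs (Rmax a (Rmin b z) - Rmax a (Rmin b x)) < d).
  eapply Rle_lt_trans; [now apply clamp_lipschitz|exact Hz].
Qed.

Lemma extend_on_is_derive a b f x l : a < x < b -> is_derive f x l ->
  is_derive (extend_on a b f) x l.
Proof.
  intros Hx H. apply (is_derive_ext_loc f); [|exact H].
  assert (Hp : 0 < Rmin (x - a) (b - x)) by (apply Rmin_pos; lra).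
  exists (mkposreal _ Hp). intros y Hy. change (Rabs (y - x) < Rmin (x - a) (b - x)) in Hy.
  assert (Hm1 := Rmin_l (x - a) (b - x)). assert (Hm2 := Rmin_r (x - a) (b - x)).
  destruct (Rabs_def2 _ _ Hy). symmetry. apply extend_on_eq. lra.
Qed.

Lemma max_abs_on_bound (a b : R) (f : R -> R) : a <= b -> cont_on a b f ->
  forall x, a <= x <= b -> Rabs (f x) <= max_abs_on a b f.
Proof.
  intros Hab Hc.
  destruct (continuity_ab_maj (fun x => Rabs (extend_on a b f x)) a b Hab) as [xm [Hxm Hxm_in]].
  { intros x _. apply continuity_pt_filterlim, (continuous_Rabs_comp (extend_on a b f)).
    now apply extend_on_continuous. }
  assert (Hlub : Lub_Rbar (fun y => exists t, a <= t <= b /\ y = Rabs (f t)) = Rabs (f xm)).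
  { apply is_lub_Rbar_unique. split.
    - intros y [t [Ht ->]]. simpl. specialize (Hxm t Ht). now rewrite !extend_on_eq in Hxm.
    - intros l Hl. apply Hl. now exists xm. }
  intros x Hx. unfold max_abs_on. rewrite Hlub. simpl.
  specialize (Hxm x Hx). now rewrite !extend_on_eq in Hxm.
Qed.

(** * Mean value inequality and Taylor bounds *)

Lemma sub_le_sub_of_derive_le (a b : R) (u u' U U' : R -> R) : a <= b ->
  (forall x, a < x < b -> is_derive u x (u' x)) ->
  (forall x, a < x < b -> is_derive U x (U' x)) ->
  cont_on a b u -> cont_on a b U ->
  (forall x, a < x < b -> u' x <= U' x) ->
  u b - u a <= U b - U a.
Proof.
  intros Hab Hu HU Hcu HcU Hle.
  destruct (Req_dec a b) as [->|Hne]; [lra|].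
  (* [MVT_gen] may return an endpoint, where nothing is known about [U' - u']: clip it at 0. *)
  destruct (MVT_gen (fun x => extend_on a b U x - extend_on a b u x) a b
              (fun x => Rmax 0 (U' x - u' x))) as [x [_ Hphi]].
  - intros x Hx. rewrite Rmin_left, Rmax_right in Hx by lra.
    rewrite Rmax_right by (generalize (Hle x Hx); lra).
    apply (is_derive_minus (extend_on a b U) (extend_on a b u));
      apply extend_on_is_derive; auto.
  - intros x _. apply continuity_pt_filterlim.
    apply (continuous_minus (extend_on a b U) (extend_on a b u));
      now apply extend_on_continuous.
  - rewrite !extend_on_eq in Hphi by lra.
    assert (0 <= Rmax 0 (U' x - u' x)) by apply Rmax_l. nra.
Qed.

Lemma abs_sub_le_of_derive_abs_le (a b : R) (u u' U U' : R -> R) : a <= b ->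
  (forall x, a < x < b -> is_derive u x (u' x)) ->
  (forall x, a < x < b -> is_derive U x (U' x)) ->
  cont_on a b u -> cont_on a b U ->
  (forall x, a < x < b -> Rabs (u' x) <= U' x) ->
  Rabs (u b - u a) <= U b - U a.
Proof.
  intros Hab Hu HU Hcu HcU Hle. apply Rabs_le. split.
  - enough (- u b - - u a <= U b - U a) by lra.
    apply (sub_le_sub_of_derive_le a b (fun x => - u x) (fun x => - u' x) U U'); auto.
    + intros x Hx. apply (is_derive_opp u), Hu, Hx.
    + now apply cont_on_opp.
    + intros x Hx. specialize (Hle x Hx). generalize (Rle_abs (- u' x)). rewrite Rabs_Ropp. lra.
  - apply (sub_le_sub_of_derive_le a b u u' U U'); auto.
    intros x Hx. specialize (Hle x Hx). generalize (Rle_abs (u' x)). lra.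
Qed.

Lemma is_derive_pow_primitive K y n s :
  is_derive (fun s => K * (s - y) ^ S n / INR (S n)) s (K * (s - y) ^ n).
Proof.
  assert (Hn : INR (S n) <> 0) by (apply not_0_INR; lia).
  auto_derive; auto. change (match n with 0%nat => 1 | S _ => INR n + 1 end) with (INR (S n)).
  change (s + - y) with (s - y). now field.
Qed.

Lemma is_derive_pow_primitive_rev K y n s :
  is_derive (fun s => - (K * (y - s) ^ S n / INR (S n))) s (K * (y - s) ^ n).
Proof.
  assert (Hn : INR (S n) <> 0) by (apply not_0_INR; lia).
  auto_derive; auto. change (match n with 0%nat => 1 | S _ => INR n + 1 end) with (INR (S n)).
  change (y + - s) with (y - s). now field.
Qed.

Lemma taylor_step (a b : R) (f f' P P' : R -> R) (K : R) (n : nat) (y : R) :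
  a <= y <= b -> deriv_on a b f f' ->
  (forall s, is_derive P s (P' s)) -> f y + P y = 0 ->
  (forall s, a < s < b -> Rabs (f' s + P' s) <= K * Rabs (s - y) ^ n) ->
  forall x, a <= x <= b -> Rabs (f x + P x) <= K * Rabs (x - y) ^ S n / INR (S n).
Proof.
  intros Hy Hf HP H0 Hb x Hx.
  assert (HF : forall a' b', a <= a' -> b' <= b -> cont_on a' b' (fun s => f s + P s)).
  { intros a' b' Ha' Hb'. apply cont_on_plus.
    - eapply cont_on_subinterval; [eapply deriv_on_cont_on; eauto|lra|lra].
    - apply cont_on_of_continuous. intros s. eapply is_derive_continuous, HP. }
  assert (HF' : forall s, a < s < b -> is_derive (fun s => f s + P s) s (f' s + P' s)).
  { intros s Hs. apply (is_derive_plus f P); [now apply (deriv_on_is_derive a b)|apply HP]. }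
  destruct (Rle_dec y x) as [Hyx|Hxy].
  - assert (Hm := abs_sub_le_of_derive_abs_le y x (fun s => f s + P s) (fun s => f' s + P' s)
      (fun s => K * (s - y) ^ S n / INR (S n)) (fun s => K * (s - y) ^ n) Hyx).
    cbv beta in Hm.
    rewrite H0, Rminus_0_r, Rminus_diag, pow_i, Rmult_0_r, Rdiv_0_l, Rminus_0_r in Hm by lia.
    rewrite (Rabs_pos_eq (x - y)) by lra. apply Hm.
    + intros s Hs. apply HF'. lra.
    + intros s _. apply is_derive_pow_primitive.
    + apply HF; lra.
    + apply cont_on_of_continuous. intros s. eapply is_derive_continuous, is_derive_pow_primitive.
    + intros s Hs. rewrite <- (Rabs_pos_eq (s - y)) by lra. apply Hb. lra.
  - assert (Hm := abs_sub_le_of_derive_abs_le x y (fun s => f s + P s) (fun s => f' s + P' s)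
      (fun s => - (K * (y - s) ^ S n / INR (S n))) (fun s => K * (y - s) ^ n) ltac:(lra)).
    cbv beta in Hm. rewrite H0, Rminus_0_l, Rabs_Ropp, Rminus_diag, pow_i, Rmult_0_r, Rdiv_0_l,
      Ropp_0, Rminus_0_l, Ropp_involutive in Hm by lia.
    rewrite <- (Rabs_Ropp (x - y)), (Rabs_pos_eq (- (x - y))) by lra.
    replace (- (x - y)) with (y - x) by ring. apply Hm.
    + intros s Hs. apply HF'. lra.
    + intros s _. apply is_derive_pow_primitive_rev.
    + apply HF; lra.
    + apply cont_on_of_continuous. intros s.
      eapply is_derive_continuous, is_derive_pow_primitive_rev.
    + intros s Hs. rewrite <- (Rabs_pos_eq (y - s)), <- (Rabs_Ropp (y - s)) by lra.
      replace (- (y - s)) with (s - y) by ring. apply Hb. lra.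
Qed.

Section Taylor.
Variables (a b M : R) (p p1 p2 p3 p4 : R -> R).
Hypothesis HC : C4_on a b p p1 p2 p3 p4.
Hypothesis HM : forall x, a <= x <= b -> Rabs (p4 x) <= M.

Lemma taylor_p3 x y : a <= x <= b -> a <= y <= b -> Rabs (p3 x - p3 y) <= M * Rabs (x - y).
Proof.
  intros Hx Hy. destruct HC as (_ & _ & _ & D3 & _).
  pose proof (taylor_step a b p3 p4 (fun _ => - p3 y) (fun _ => 0) M 0 y Hy D3) as H.
  cbv beta in H.
  replace (p3 x - p3 y) with (p3 x + - p3 y) by ring.
  eapply Rle_trans; [apply H; auto|right; simpl; field].
  - intros s. auto_derive; auto.
  - ring.
  - intros s Hs. rewrite Rplus_0_r, Rmult_1_r. apply HM. lra.
Qed.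

Lemma taylor_p2 x y : a <= x <= b -> a <= y <= b ->
  Rabs (p2 x - p2 y - p3 y * (x - y)) <= M * (x - y) ^ 2 / 2.
Proof.
  intros Hx Hy. destruct HC as (_ & _ & D2 & _).
  pose proof (taylor_step a b p2 p3 (fun s => - p2 y - p3 y * (s - y)) (fun _ => - p3 y)
                M 1 y Hy D2) as H.
  cbv beta in H. rewrite <- pow2_abs.
  replace (p2 x - p2 y - p3 y * (x - y)) with (p2 x + (- p2 y - p3 y * (x - y))) by ring.
  apply H; auto.
  - intros s. auto_derive; auto. ring.
  - ring.
  - intros s Hs. rewrite pow_1. replace (p3 s + - p3 y) with (p3 s - p3 y) by ring.
    apply taylor_p3; lra.
Qed.

Lemma taylor_p1 x y : a <= x <= b -> a <= y <= b ->
  Rabs (p1 x - p1 y - p2 y * (x - y) - p3 y * (x - y) ^ 2 / 2) <= M * Rabs (x - y) ^ 3 / 6.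
Proof.
  intros Hx Hy. destruct HC as (_ & D1 & _).
  pose proof (taylor_step a b p1 p2 (fun s => - p1 y - p2 y * (s - y) - p3 y * (s - y) ^ 2 / 2)
    (fun s => - p2 y - p3 y * (s - y)) (M / 2) 2 y Hy D1) as H.
  cbv beta in H.
  replace (p1 x - p1 y - p2 y * (x - y) - p3 y * (x - y) ^ 2 / 2)
    with (p1 x + (- p1 y - p2 y * (x - y) - p3 y * (x - y) ^ 2 / 2)) by ring.
  eapply Rle_trans; [apply H; auto|right; simpl; field].
  - intros s. auto_derive; auto. field.
  - field.
  - intros s Hs. rewrite pow2_abs.
    replace (p2 s + (- p2 y - p3 y * (s - y))) with (p2 s - p2 y - p3 y * (s - y)) by ring.
    replace (M / 2 * (s - y) ^ 2) with (M * (s - y) ^ 2 / 2) by field.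
    apply taylor_p2; lra.
Qed.

Lemma taylor_p x y : a <= x <= b -> a <= y <= b ->
  Rabs (p x - p y - p1 y * (x - y) - p2 y * (x - y) ^ 2 / 2 - p3 y * (x - y) ^ 3 / 6)
  <= M * (x - y) ^ 4 / 24.
Proof.
  intros Hx Hy. destruct HC as (D0 & _).
  pose proof (taylor_step a b p p1
    (fun s => - p y - p1 y * (s - y) - p2 y * (s - y) ^ 2 / 2 - p3 y * (s - y) ^ 3 / 6)
    (fun s => - p1 y - p2 y * (s - y) - p3 y * (s - y) ^ 2 / 2) (M / 6) 3 y Hy D0) as H.
  cbv beta in H.
  replace (p x - p y - p1 y * (x - y) - p2 y * (x - y) ^ 2 / 2 - p3 y * (x - y) ^ 3 / 6)
    with (p x + (- p y - p1 y * (x - y) - p2 y * (x - y) ^ 2 / 2 - p3 y * (x - y) ^ 3 / 6))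
    by ring.
  replace ((x - y) ^ 4) with (Rabs (x - y) ^ 4)
    by (change 4%nat with (2 * 2)%nat; now rewrite !pow_mult, pow2_abs).
  eapply Rle_trans; [apply H; auto|right; simpl; field].
  - intros s. auto_derive; auto. field.
  - field.
  - intros s Hs.
    replace (p1 s + (- p1 y - p2 y * (s - y) - p3 y * (s - y) ^ 2 / 2))
      with (p1 s - p1 y - p2 y * (s - y) - p3 y * (s - y) ^ 2 / 2) by ring.
    replace (M / 6 * Rabs (s - y) ^ 3) with (M * Rabs (s - y) ^ 3 / 6) by field.
    apply taylor_p1; lra.
Qed.

Lemma second_difference_error y h : 0 < h -> a <= y - h -> y + h <= b ->
  Rabs (((p (y + h) - p y) / h - (p y - p (y - h)) / h) / h - p2 y) <= M * h ^ 2 / 12.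
Proof.
  intros Hh Ha Hb.
  pose proof (taylor_p (y + h) y ltac:(lra) ltac:(lra)) as H1.
  pose proof (taylor_p (y - h) y ltac:(lra) ltac:(lra)) as H2.
  replace (y + h - y) with h in H1 by ring. replace (y - h - y) with (- h) in H2 by ring.
  set (R1 := p (y + h) - p y - p1 y * h - p2 y * h ^ 2 / 2 - p3 y * h ^ 3 / 6) in H1.
  set (R2 := p (y - h) - p y - p1 y * - h - p2 y * (- h) ^ 2 / 2 - p3 y * (- h) ^ 3 / 6) in H2.
  replace (((p (y + h) - p y) / h - (p y - p (y - h)) / h) / h - p2 y)
    with ((R1 + R2) / h ^ 2) by (unfold R1, R2; field; lra).
  assert (Hh2 : 0 < h ^ 2) by (apply pow_lt; lra).
  unfold Rdiv at 1.
  rewrite Rabs_mult, (Rabs_pos_eq (/ h ^ 2)) by (left; now apply Rinv_0_lt_compat).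
  apply (Rmult_le_reg_r (h ^ 2)); [exact Hh2|].
  rewrite Rmult_assoc, Rinv_l by lra.
  replace ((- h) ^ 4) with (h ^ 4) in H2 by ring.
  eapply Rle_trans; [rewrite Rmult_1_r; apply Rabs_triang|]. nra.
Qed.

Lemma first_step_error y h : 0 < h -> a <= y -> y + h <= b ->
  Rabs (2 / h * ((p (y + h) - p y) / h - p1 y) - (p2 y + p3 y * h / 3)) <= M * h ^ 2 / 12.
Proof.
  intros Hh Ha Hb.
  pose proof (taylor_p (y + h) y ltac:(lra) ltac:(lra)) as H.
  replace (y + h - y) with h in H by ring.
  replace (2 / h * ((p (y + h) - p y) / h - p1 y) - (p2 y + p3 y * h / 3))
    with (2 / h ^ 2 * (p (y + h) - p y - p1 y * h - p2 y * h ^ 2 / 2 - p3 y * h ^ 3 / 6))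
    by (field; lra).
  assert (Hh2 : 0 < 2 / h ^ 2) by (apply Rdiv_lt_0_compat; [lra|apply pow_lt; lra]).
  rewrite Rabs_mult, (Rabs_pos_eq (2 / h ^ 2)) by lra.
  apply (Rmult_le_compat_l (2 / h ^ 2)) in H; [|lra].
  eapply Rle_trans; [exact H|]. right. field. lra.
Qed.

(* [d0] need only approximate the tangent line of [p2] at [y], evaluated at [z0]: this is how
   delta_t^2 p^0, which approximates p''(0) + p'''(0) tau / 3, enters the first piece. *)
Lemma interpolation_error y z0 z1 x lam d0 d1 e0 e1 :
  a <= y <= b -> a <= z1 <= b -> a <= x <= b -> x = (1 - lam) * z0 + lam * z1 ->
  Rabs (d0 - (p2 y + p3 y * (z0 - y))) <= e0 -> Rabs (d1 - p2 z1) <= e1 ->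
  Rabs (p2 x - ((1 - lam) * d0 + lam * d1))
  <= M * (x - y) ^ 2 / 2 + Rabs lam * (M * (z1 - y) ^ 2 / 2 + e1) + Rabs (1 - lam) * e0.
Proof.
  intros Hy Hz1 Hx Hxz H0 H1.
  pose proof (taylor_p2 x y Hx Hy) as Tx. pose proof (taylor_p2 z1 y Hz1 Hy) as Tz.
  replace (p2 x - ((1 - lam) * d0 + lam * d1))
    with ((p2 x - p2 y - p3 y * (x - y)) - lam * ((p2 z1 - p2 y - p3 y * (z1 - y)) + (d1 - p2 z1))
          - (1 - lam) * (d0 - (p2 y + p3 y * (z0 - y)))) by (subst x; ring).
  assert (Hz : Rabs (lam * ((p2 z1 - p2 y - p3 y * (z1 - y)) + (d1 - p2 z1)))
                <= Rabs lam * (M * (z1 - y) ^ 2 / 2 + e1)).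
  { rewrite Rabs_mult. apply Rmult_le_compat_l; [apply Rabs_pos|].
    eapply Rle_trans; [apply Rabs_triang|]. now apply Rplus_le_compat. }
  assert (H0' : Rabs ((1 - lam) * (d0 - (p2 y + p3 y * (z0 - y)))) <= Rabs (1 - lam) * e0).
  { rewrite Rabs_mult. apply Rmult_le_compat_l; [apply Rabs_pos|exact H0]. }
  unfold Rminus at 1 2. eapply Rle_trans; [apply Rabs_triang|].
  rewrite Rabs_Ropp. eapply Rle_trans; [apply Rplus_le_compat_r, Rabs_triang|].
  rewrite Rabs_Ropp. lra.
Qed.

End Taylor.

(** * Improper integrals *)

Definition is_interval (D : R -> Prop) : Prop :=
  forall x y z, D x -> D z -> x <= y <= z -> D y.

Lemma is_interval_between D a b x :
  is_interval D -> D a -> D b -> Rmin a b <= x <= Rmax a b -> D x.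
Proof.
  intros HD Ha Hb Hx. unfold Rmin, Rmax in Hx. destruct Rle_dec.
  - now apply (HD a x b).
  - apply (HD b x a); auto; lra.
Qed.

Lemma is_RInt_gen_of_filterlim (f : R -> R) Fa Fb {FFa : Filter Fa} {FFb : Filter Fb}
  (If : R * R -> R) (l : R) :
  filter_prod Fa Fb (fun ab => is_RInt f (fst ab) (snd ab) (If ab)) ->
  filterlim If (filter_prod Fa Fb) (locally l) -> is_RInt_gen f Fa Fb l.
Proof.
  intros HI Hl P HP. unfold filtermapi.
  specialize (Hl P HP). unfold filtermap in Hl.
  generalize (filter_and _ _ HI Hl). apply filter_imp.
  intros ab [H1 H2]. exists (If ab). now split.
Qed.

Lemma is_RInt_gen_antiderivative Fa Fb {FFa : Filter Fa} {FFb : Filter Fb}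
  (g G : R -> R) (D : R -> Prop) (La Lb : R) :
  is_interval D -> Fa D -> Fb D ->
  (forall x, D x -> is_derive G x (g x)) -> (forall x, D x -> continuous g x) ->
  filterlim G Fa (locally La) -> filterlim G Fb (locally Lb) ->
  is_RInt_gen g Fa Fb (Lb - La).
Proof.
  intros HD HDa HDb Hd Hg HLa HLb.
  apply (is_RInt_gen_of_filterlim g Fa Fb (fun ab => G (snd ab) - G (fst ab))).
  - apply (Filter_prod _ _ _ D D HDa HDb). intros x y Hx Hy.
    apply (is_RInt_derive G g); intros z Hz;
      [apply Hd|apply Hg]; now apply (is_interval_between D x y).
  - apply (filterlim_comp_2 (G := locally Lb) (H := locally (opp La))
      (fun ab => G (snd ab)) (fun ab => opp (G (fst ab))) plus).
    + eapply filterlim_comp; [apply filterlim_snd|exact HLb].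
    + eapply filterlim_comp; [eapply filterlim_comp; [apply filterlim_fst|exact HLa]|].
      exact (filterlim_opp (K := R_AbsRing) (V := R_NormedModule) La).
    + exact (filterlim_plus (K := R_AbsRing) (V := R_NormedModule) Lb (opp La)).
Qed.

Section Dominated.
Variables (f g G : R -> R) (D : R -> Prop) (Fa Fb : (R -> Prop) -> Prop).
Context {FFa : ProperFilter Fa} {FFb : ProperFilter Fb}.
Hypothesis HD : is_interval D.
Hypothesis Hf : forall x, D x -> continuous f x.
Hypothesis HG : forall x, D x -> is_derive G x (g x).
Hypothesis Hg : forall x, D x -> continuous g x.
Hypothesis Hfg : forall x, D x -> Rabs (f x) <= g x.

Lemma ex_RInt_on_interval x y : D x -> D y -> ex_RInt f x y.
Proof.
  intros Hx Hy. apply (ex_RInt_continuous (V := R_CompleteNormedModule)). intros z Hz.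
  apply Hf. now apply (is_interval_between D x y).
Qed.

Lemma abs_RInt_le_antiderivative x y : D x -> D y -> Rabs (RInt f x y) <= Rabs (G y - G x).
Proof.
  assert (Hle : forall a b, D a -> D b -> a <= b -> Rabs (RInt f a b) <= G b - G a).
  { intros a b Ha Hb Hab.
    assert (Hab' : forall z, Rmin a b <= z <= Rmax a b -> D z)
      by (intros z Hz; now apply (is_interval_between D a b)).
    assert (HI : is_RInt g a b (G b - G a)).
    { apply (is_RInt_derive G g); intros z Hz; [apply HG|apply Hg]; auto. }
    eapply Rle_trans; [apply abs_RInt_le; [exact Hab|now apply ex_RInt_on_interval]|].
    rewrite <- (is_RInt_unique _ _ _ _ HI).
    apply RInt_le; [exact Hab| | |].
    - now apply (ex_RInt_norm f a b), ex_RInt_on_interval.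
    - now exists (G b - G a).
    - intros z Hz. apply Hfg, Hab'. rewrite Rmin_left, Rmax_right; lra. }
  intros Hx Hy. destruct (Rle_dec x y) as [Hxy|Hxy].
  - eapply Rle_trans; [apply Hle; auto|apply Rle_abs].
  - rewrite <- (opp_RInt_swap (V := R_CompleteNormedModule)) by now apply ex_RInt_on_interval.
    change (Rabs (- RInt f y x) <= Rabs (G y - G x)).
    rewrite Rabs_Ropp, <- (Rabs_Ropp (G y - G x)). replace (- (G y - G x)) with (G x - G y) by ring.
    eapply Rle_trans; [apply Hle; auto; lra|apply Rle_abs].
Qed.

Lemma abs_RInt_sub_RInt_le u1 u2 v1 v2 : D u1 -> D u2 -> D v1 -> D v2 ->
  Rabs (RInt f v1 v2 - RInt f u1 u2) <= Rabs (G v1 - G u1) + Rabs (G u2 - G v2).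
Proof.
  intros Hu1 Hu2 Hv1 Hv2.
  rewrite <- (RInt_Chasles (V := R_CompleteNormedModule) f u1 v1 u2),
    <- (RInt_Chasles (V := R_CompleteNormedModule) f v1 v2 u2) by now apply ex_RInt_on_interval.
  change (Rabs (RInt f v1 v2 - (RInt f u1 v1 + (RInt f v1 v2 + RInt f v2 u2)))
          <= Rabs (G v1 - G u1) + Rabs (G u2 - G v2)).
  replace (RInt f v1 v2 - (RInt f u1 v1 + (RInt f v1 v2 + RInt f v2 u2)))
    with (- (RInt f u1 v1 + RInt f v2 u2)) by ring.
  rewrite Rabs_Ropp. eapply Rle_trans; [apply Rabs_triang|].
  apply Rplus_le_compat; now apply abs_RInt_le_antiderivative.
Qed.

Lemma ex_RInt_gen_dominated (La Lb : R) :
  Fa D -> Fb D -> filterlim G Fa (locally La) -> filterlim G Fb (locally Lb) ->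
  ex_RInt_gen f Fa Fb.
Proof.
  intros HDa HDb HLa HLb.
  set (If ab := RInt f (fst ab) (snd ab)).
  destruct (proj1 (filterlim_locally_cauchy (F := filter_prod Fa Fb) If)) as [l Hl].
  - intros eps.
    assert (He : 0 < eps / 4) by (generalize (cond_pos eps); lra).
    pose proof (proj1 (filterlim_locally _ _) HLa (mkposreal _ He)) as Ha.
    pose proof (proj1 (filterlim_locally _ _) HLb (mkposreal _ He)) as Hb.
    exists (fun ab => D (fst ab) /\ D (snd ab) /\
      Rabs (G (fst ab) - La) < eps / 4 /\ Rabs (G (snd ab) - Lb) < eps / 4).
    split.
    + apply (Filter_prod _ _ _ _ _ (filter_and _ _ HDa Ha) (filter_and _ _ HDb Hb)).
      intros x y [Hx1 Hx2] [Hy1 Hy2]. repeat split; auto.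
    + intros [u1 u2] [v1 v2] (Hu1 & Hu2 & Hu3 & Hu4) (Hv1 & Hv2 & Hv3 & Hv4). simpl in *.
      change (Rabs (RInt f v1 v2 - RInt f u1 u2) < eps).
      eapply Rle_lt_trans; [now apply abs_RInt_sub_RInt_le|].
      pose proof (Rabs_triang (G v1 - La) (- (G u1 - La))).
      pose proof (Rabs_triang (G u2 - Lb) (- (G v2 - Lb))).
      rewrite Rabs_Ropp in *.
      replace (G v1 - La + - (G u1 - La)) with (G v1 - G u1) in * by ring.
      replace (G u2 - Lb + - (G v2 - Lb)) with (G u2 - G v2) in * by ring.
      lra.
  - exists l. apply (is_RInt_gen_of_filterlim f Fa Fb If l); auto.
    apply (Filter_prod _ _ _ D D HDa HDb). intros x y Hx Hy.
    apply (RInt_correct (V := R_CompleteNormedModule)). now apply ex_RInt_on_interval.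
Qed.

End Dominated.

Lemma is_RInt_gen_nonneg Fa Fb {FFa : ProperFilter Fa} {FFb : ProperFilter Fb} (f : R -> R) l :
  filter_prod Fa Fb (fun ab => fst ab <= snd ab /\ forall x, fst ab <= x <= snd ab -> 0 <= f x) ->
  is_RInt_gen f Fa Fb l -> 0 <= l.
Proof.
  intros H Hl.
  assert (Habs : Rabs l <= l).
  { apply (RInt_gen_norm (Fa := Fa) (Fb := Fb) f f l l); [| |exact Hl|exact Hl].
    - revert H. apply filter_imp. now intros ab [Hab _].
    - revert H. apply filter_imp. intros ab [_ Hf] x Hx.
      specialize (Hf x Hx). change (Rabs (f x) <= f x). rewrite Rabs_pos_eq; lra. }
  generalize (Rabs_pos l). lra.
Qed.

(** * The Gamma function on (0, 1) *)

Lemma exp_le_compat x y : x <= y -> exp x <= exp y.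
Proof. intros H. destruct (Req_dec x y) as [->|Hne]; [lra|]. left. apply exp_increasing. lra. Qed.

Lemma filterlim_at_point (f : R -> R) a : filterlim f (at_point a) (locally (f a)).
Proof. intros P HP. exact (locally_singleton _ _ HP). Qed.

Lemma continuous_exp_opp x : continuous (fun t => exp (- t)) x.
Proof. apply (is_derive_continuous _ _ (- exp (- x))). auto_derive; auto. ring. Qed.

Definition gamma_integrand (z x : R) : R := Rpower x (z - 1) * exp (- x).

Lemma gamma_integrand_continuous z x : 0 < x -> continuous (gamma_integrand z) x.
Proof.
  intros Hx. apply (continuous_mult (fun t => Rpower t (z - 1)) (fun t => exp (- t))).
  - eapply is_derive_continuous, is_derive_Rpower, Hx.
  - apply continuous_exp_opp.
Qed.

Section Gamma.
Variable z : R.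
Hypothesis Hz : 0 < z < 1.

Lemma ex_RInt_gen_gamma_0_1 : ex_RInt_gen (gamma_integrand z) (at_right 0) (at_point 1).
Proof.
  eapply (ex_RInt_gen_dominated (gamma_integrand z) (fun x => Rpower x (z - 1))
    (fun x => / z * Rpower x z) (fun x => 0 < x) (at_right 0) (at_point 1)).
  - intros x y w Hx Hw Hy. lra.
  - intros x Hx. now apply gamma_integrand_continuous.
  - intros x Hx. replace (Rpower x (z - 1)) with (/ z * (z * Rpower x (z - 1))) by (field; lra).
    apply is_derive_scal, is_derive_Rpower, Hx.
  - intros x Hx. eapply is_derive_continuous, is_derive_Rpower, Hx.
  - intros x Hx. unfold gamma_integrand. rewrite Rabs_mult, !Rabs_pos_eq by apply Rlt_le, exp_pos.
    rewrite <- (Rmult_1_r (Rpower x (z - 1))) at 2.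
    apply Rmult_le_compat_l; [apply Rlt_le, exp_pos|].
    rewrite <- exp_0. apply exp_le_compat. lra.
  - now exists (mkposreal 1 Rlt_0_1).
  - unfold at_point. lra.
  - apply (filterlim_mult_0 (at_right 0)), filterlim_Rpower_0. lra.
  - apply (filterlim_at_point (fun x => / z * Rpower x z)).
Qed.

Lemma ex_RInt_gen_gamma_1_oo :
  ex_RInt_gen (gamma_integrand z) (at_point 1) (Rbar_locally p_infty).
Proof.
  eapply (ex_RInt_gen_dominated (gamma_integrand z) (fun x => exp (- x))
    (fun x => - exp (- x)) (fun x => 1 <= x) (at_point 1) (Rbar_locally p_infty)).
  - intros x y w Hx Hw Hy. lra.
  - intros x Hx. apply gamma_integrand_continuous. lra.
  - intros x Hx. auto_derive; auto. ring.
  - intros x Hx. apply continuous_exp_opp.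
  - intros x Hx. unfold gamma_integrand. rewrite Rabs_mult, !Rabs_pos_eq by apply Rlt_le, exp_pos.
    rewrite <- (Rmult_1_l (exp (- x))) at 2.
    apply Rmult_le_compat_r; [apply Rlt_le, exp_pos|].
    apply Rle_trans with (Rpower x 0); [apply Rle_Rpower; lra|rewrite Rpower_O; lra].
  - unfold at_point. lra.
  - exists 1. intros x Hx. lra.
  - apply (filterlim_at_point (fun x => - exp (- x))).
  - apply (filterlim_comp _ _ _ (fun x => exp (- x)) Ropp _ (locally 0)).
    + exact filterlim_exp_opp.
    + exact (filterlim_opp (K := R_AbsRing) (V := R_NormedModule) 0).
Qed.

Lemma Gamma_split : exists l1 l2,
  is_RInt_gen (gamma_integrand z) (at_right 0) (at_point 1) l1 /\
  is_RInt_gen (gamma_integrand z) (at_point 1) (Rbar_locally p_infty) l2 /\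
  Gamma z = l1 + l2.
Proof.
  destruct ex_RInt_gen_gamma_0_1 as [l1 H1]. destruct ex_RInt_gen_gamma_1_oo as [l2 H2].
  exists l1, l2. repeat split; auto.
  exact (is_RInt_gen_unique _ _ (is_RInt_gen_Chasles (gamma_integrand z) 1 l1 l2 H1 H2)).
Qed.

Lemma is_RInt_gen_Gamma :
  is_RInt_gen (gamma_integrand z) (at_right 0) (Rbar_locally p_infty) (Gamma z).
Proof.
  destruct Gamma_split as (l1 & l2 & H1 & H2 & ->).
  exact (is_RInt_gen_Chasles (gamma_integrand z) 1 l1 l2 H1 H2).
Qed.

Lemma is_RInt_gen_const_0_1 (C : R) : is_RInt_gen (fun _ => C) (at_right 0) (at_point 1) C.
Proof.
  enough (H : is_RInt_gen (fun _ => C) (at_right 0) (at_point 1) (C * 1 - C * 0))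
    by (now replace (C * 1 - C * 0) with C in H by ring).
  apply (is_RInt_gen_antiderivative _ _ _ (fun x => C * x) (fun _ => True)).
  - now intros x y w.
  - now exists (mkposreal 1 Rlt_0_1).
  - easy.
  - intros x _. auto_derive; auto. ring.
  - intros x _. apply continuous_const.
  - assert (Hc0 : continuous (fun x => C * x) 0).
    { apply (is_derive_continuous _ _ C). auto_derive; auto. ring. }
    eapply filterlim_filter_le_1; [|exact Hc0].
    intros P [d Hd]. exists d. intros y Hy _. now apply Hd.
  - apply (filterlim_at_point (fun x => C * x)).
Qed.

Lemma gamma_integral_0_1_ge l : is_RInt_gen (gamma_integrand z) (at_right 0) (at_point 1) l ->
  exp (- 1) <= l.
Proof.
  intros Hl.
  enough (0 <= l - exp (- 1)) by lra.
  apply (is_RInt_gen_nonneg (at_right 0) (at_point 1)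
           (fun x => minus (gamma_integrand z x) (exp (- 1)))).
  2: exact (is_RInt_gen_minus _ _ _ _ Hl (is_RInt_gen_const_0_1 (exp (- 1)))).
  apply (Filter_prod _ _ _ (fun a => 0 < a < 1) (fun b => b = 1)).
  - exists (mkposreal 1 Rlt_0_1). intros y Hy Hy0. change (Rabs (y - 0) < 1) in Hy.
    rewrite Rminus_0_r in Hy. destruct (Rabs_def2 _ _ Hy). lra.
  - reflexivity.
  - intros a b Ha ->. split; [simpl; lra|]. intros x Hx. simpl in Hx.
    change (0 <= Rpower x (z - 1) * exp (- x) - exp (- 1)).
    assert (1 <= Rpower x (z - 1)).
    { unfold Rpower. rewrite <- exp_0 at 1. apply exp_le_compat.
      assert (ln x <= 0) by (rewrite <- ln_1; apply ln_le; lra). nra. }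
    assert (exp (- 1) <= exp (- x)) by (apply exp_le_compat; lra).
    assert (0 < exp (- 1)) by apply exp_pos. nra.
Qed.

Lemma gamma_integral_1_oo_nonneg l :
  is_RInt_gen (gamma_integrand z) (at_point 1) (Rbar_locally p_infty) l -> 0 <= l.
Proof.
  apply (is_RInt_gen_nonneg (at_point 1) (Rbar_locally p_infty) (gamma_integrand z)).
  apply (Filter_prod _ _ _ (fun a => a = 1) (fun b => 1 < b)).
  - reflexivity.
  - now exists 1.
  - intros a b -> Hb. split; [simpl; lra|]. intros x Hx.
    apply Rmult_le_pos; apply Rlt_le; [apply Rpower_pos|apply exp_pos].
Qed.

Lemma Gamma_pos : 0 < Gamma z.
Proof.
  destruct Gamma_split as (l1 & l2 & H1 & H2 & ->).
  generalize (gamma_integral_0_1_ge l1 H1) (gamma_integral_1_oo_nonneg l2 H2) (exp_pos (- 1)).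
  lra.
Qed.

Lemma filterlim_gamma_primitive_0 :
  filterlim (fun x => Rpower x z * exp (- x)) (at_right 0) (locally 0).
Proof.
  change (filterlim (fun x => Rpower x z * exp (- x)) (at_right 0) (Rbar_locally 0)).
  apply (filterlim_le_le (fun _ => 0) _ (fun x => Rpower x z)).
  - exists (mkposreal 1 Rlt_0_1). intros x Hx Hx0. change (Rabs (x - 0) < 1) in Hx.
    rewrite Rminus_0_r in Hx. destruct (Rabs_def2 _ _ Hx).
    assert (0 < Rpower x z) by apply Rpower_pos.
    assert (exp (- x) <= 1) by (rewrite <- exp_0; apply exp_le_compat; lra).
    assert (0 < exp (- x)) by apply exp_pos. nra.
  - apply filterlim_const.
  - apply filterlim_Rpower_0. lra.
Qed.

Lemma filterlim_gamma_primitive_p_infty :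
  filterlim (fun x => Rpower x z * exp (- x)) (Rbar_locally p_infty) (locally 0).
Proof.
  change (filterlim (fun x => Rpower x z * exp (- x)) (Rbar_locally p_infty) (Rbar_locally 0)).
  apply (filterlim_le_le (fun _ => 0) _ (fun x => / (exp x / x))).
  - exists 1. intros x Hx.
    replace (/ (exp x / x)) with (x * exp (- x))
      by (rewrite exp_Ropp; field; split; [lra|apply Rgt_not_eq, exp_pos]).
    assert (Rpower x z <= x) by (rewrite <- (Rpower_1 x) at 2 by lra; apply Rle_Rpower; lra).
    assert (0 < Rpower x z) by apply Rpower_pos.
    assert (0 < exp (- x)) by apply exp_pos. nra.
  - apply filterlim_const.
  - exact (is_lim_inv _ _ _ is_lim_div_exp_p ltac:(discriminate)).
Qed.

(* Integration by parts: [d/dx (x^z e^-x) = z x^(z-1) e^-x - x^z e^-x]. *)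
Lemma is_RInt_gen_gamma_by_parts :
  is_RInt_gen (fun x => z * gamma_integrand z x - gamma_integrand (z + 1) x)
    (at_right 0) (Rbar_locally p_infty) 0.
Proof.
  enough (H : is_RInt_gen (fun x => z * gamma_integrand z x - gamma_integrand (z + 1) x)
                 (at_right 0) (Rbar_locally p_infty) (0 - 0)) by now rewrite Rminus_0_r in H.
  apply (is_RInt_gen_antiderivative _ _ _ (fun x => Rpower x z * exp (- x)) (fun x => 0 < x)).
  - intros x y w Hx Hw Hy. lra.
  - now exists (mkposreal 1 Rlt_0_1).
  - now exists 0.
  - intros x Hx. unfold gamma_integrand. replace (z + 1 - 1) with z by ring.
    replace (z * (Rpower x (z - 1) * exp (- x)) - Rpower x z * exp (- x))
      with ((z * Rpower x (z - 1)) * exp (- x) + Rpower x z * - exp (- x)) by ring.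
    apply (is_derive_mult (fun t => Rpower t z) (fun t => exp (- t))).
    + now apply is_derive_Rpower.
    + auto_derive; auto. ring.
    + intros; apply Rmult_comm.
  - intros x Hx. apply (continuous_minus (fun x => z * gamma_integrand z x)).
    + apply (continuous_scal_r z (gamma_integrand z)). now apply gamma_integrand_continuous.
    + now apply gamma_integrand_continuous.
  - exact filterlim_gamma_primitive_0.
  - exact filterlim_gamma_primitive_p_infty.
Qed.

Lemma Gamma_succ : Gamma (z + 1) = z * Gamma z.
Proof.
  assert (Hs : is_RInt_gen (fun x => z * gamma_integrand z x) (at_right 0) (Rbar_locally p_infty)
                 (z * Gamma z)).
  { exact (is_RInt_gen_scal (gamma_integrand z) z _ is_RInt_gen_Gamma). }
  pose proof (is_RInt_gen_minus _ _ _ _ Hs is_RInt_gen_gamma_by_parts) as Hz1.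
  apply is_RInt_gen_ext with (g := gamma_integrand (z + 1)) in Hz1.
  - change (minus (z * Gamma z) 0) with (z * Gamma z - 0) in Hz1.
    rewrite Rminus_0_r in Hz1. exact (is_RInt_gen_unique _ _ Hz1).
  - apply filter_forall. intros ab x _.
    change (z * gamma_integrand z x - (z * gamma_integrand z x - gamma_integrand (z + 1) x)
            = gamma_integrand (z + 1) x). ring.
Qed.

End Gamma.

(** * Integrals against the kernel [(K - s)^(g - 1)] *)

Lemma is_derive_kernel_primitive K g s : 0 < g -> s < K ->
  is_derive (fun t => - / g * Rpower (K - t) g) s (Rpower (K - s) (g - 1)).
Proof.
  intros Hg Hs. replace (Rpower (K - s) (g - 1)) with (- / g * - (g * Rpower (K - s) (g - 1)))
    by (field; lra).
  now apply is_derive_scal, is_derive_Rpower_sub.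
Qed.

Lemma is_RInt_kernel K S g : 0 < g -> 0 <= S < K ->
  is_RInt (fun s => Rpower (K - s) (g - 1)) 0 S ((Rpower K g - Rpower (K - S) g) / g).
Proof.
  intros Hg HS.
  replace ((Rpower K g - Rpower (K - S) g) / g)
    with (minus (- / g * Rpower (K - S) g) (- / g * Rpower (K - 0) g))
    by (change (- / g * Rpower (K - S) g - - / g * Rpower (K - 0) g
                = (Rpower K g - Rpower (K - S) g) / g);
        rewrite Rminus_0_r; field; lra).
  apply (is_RInt_derive (fun t => - / g * Rpower (K - t) g)); intros x Hx;
    rewrite Rmin_left, Rmax_right in Hx by lra.
  - apply is_derive_kernel_primitive; lra.
  - apply continuous_Rpower_sub. lra.
Qed.

Lemma RInt_kernel_comp_lin (F : R -> R) (a t K S g : R) :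
  0 < t -> 0 < S < K -> (forall x, continuous F x) ->
  RInt (fun u => F u * Rpower (a + K * t - u) (g - 1)) a (a + S * t)
  = Rpower t g * RInt (fun s => F (a + s * t) * Rpower (K - s) (g - 1)) 0 S.
Proof.
  intros Ht HS HF.
  assert (Hex : ex_RInt (fun u => F u * Rpower (a + K * t - u) (g - 1)) (t * 0 + a) (t * S + a)).
  { apply (ex_RInt_continuous (V := R_CompleteNormedModule)). intros z Hz.
    rewrite Rmin_left, Rmax_right in Hz by nra.
    apply (continuous_mult F), continuous_Rpower_sub; [apply HF|nra]. }
  pose proof (RInt_comp_lin (V := R_CompleteNormedModule) _ t a 0 S Hex) as H.
  replace (t * 0 + a) with a in H by ring. replace (t * S + a) with (a + S * t) in H by ring.
  rewrite <- H, <- (RInt_scal (V := R_CompleteNormedModule)).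
  - apply RInt_ext. intros x Hx. rewrite Rmin_left, Rmax_right in Hx by lra.
    change (t * (F (t * x + a) * Rpower (a + K * t - (t * x + a)) (g - 1))
            = Rpower t g * (F (a + x * t) * Rpower (K - x) (g - 1))).
    replace (t * x + a) with (a + x * t) by ring.
    replace (a + K * t - (a + x * t)) with (t * (K - x)) by ring.
    rewrite <- Rpower_mult_distr by lra.
    replace g with (1 + (g - 1)) at 3 by ring. rewrite Rpower_plus, Rpower_1 by lra. ring.
  - apply (ex_RInt_continuous (V := R_CompleteNormedModule)). intros z Hz.
    rewrite Rmin_left, Rmax_right in Hz by lra.
    apply (continuous_mult (fun s => F (a + s * t))).
    + apply (continuous_comp (fun s => a + s * t) F); [|apply HF].
      apply (is_derive_continuous _ _ t). auto_derive; auto. ring.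
    + apply continuous_Rpower_sub. lra.
Qed.

Lemma ex_RInt_kernel (h : R -> R) K S g : 0 < S < K -> (forall s, continuous h s) ->
  ex_RInt (fun s => h s * Rpower (K - s) (g - 1)) 0 S.
Proof.
  intros HS Hh. apply (ex_RInt_continuous (V := R_CompleteNormedModule)). intros z Hz.
  rewrite Rmin_left, Rmax_right in Hz by lra.
  apply (continuous_mult h); [apply Hh|apply continuous_Rpower_sub; lra].
Qed.

Lemma RInt_kernel_lin_comb (phi0 phi1 : R -> R) K S g d0 d1 : 0 < S < K ->
  (forall s, continuous phi0 s) -> (forall s, continuous phi1 s) ->
  RInt (fun s => (phi0 s * d0 + phi1 s * d1) * Rpower (K - s) (g - 1)) 0 S
  = RInt (fun s => phi0 s * Rpower (K - s) (g - 1)) 0 S * d0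
    + RInt (fun s => phi1 s * Rpower (K - s) (g - 1)) 0 S * d1.
Proof.
  intros HS H0 H1. apply (is_RInt_unique (V := R_CompleteNormedModule)).
  apply (is_RInt_ext (fun s => plus (scal d0 (phi0 s * Rpower (K - s) (g - 1)))
                                    (scal d1 (phi1 s * Rpower (K - s) (g - 1))))).
  - intros x _.
    change (d0 * (phi0 x * Rpower (K - x) (g - 1)) + d1 * (phi1 x * Rpower (K - x) (g - 1))
                        = (phi0 x * d0 + phi1 x * d1) * Rpower (K - x) (g - 1)). ring.
  - rewrite (Rmult_comm _ d0), (Rmult_comm _ d1).
    exact (is_RInt_plus _ _ _ _ _ _
      (is_RInt_scal _ _ _ d0 _ (RInt_correct (V := R_CompleteNormedModule) _ _ _
                                  (ex_RInt_kernel phi0 K S g HS H0)))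
      (is_RInt_scal _ _ _ d1 _ (RInt_correct (V := R_CompleteNormedModule) _ _ _
                                  (ex_RInt_kernel phi1 K S g HS H1)))).
Qed.

Lemma abs_RInt_kernel_sub_le (F L : R -> R) K S g E : 0 < g -> 0 < S < K ->
  (forall s, continuous F s) -> (forall s, continuous L s) ->
  (forall s, 0 <= s <= S -> Rabs (F s - L s) <= E) ->
  Rabs (RInt (fun s => F s * Rpower (K - s) (g - 1)) 0 S
        - RInt (fun s => L s * Rpower (K - s) (g - 1)) 0 S)
  <= E * ((Rpower K g - Rpower (K - S) g) / g).
Proof.
  intros Hg HS HF HL HE.
  assert (HI := is_RInt_kernel K S g Hg ltac:(lra)).
  rewrite <- (RInt_minus (V := R_CompleteNormedModule)) by now apply ex_RInt_kernel.
  rewrite <- (is_RInt_unique _ _ _ _ HI), <- (RInt_scal (V := R_CompleteNormedModule))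
    by (now exists ((Rpower K g - Rpower (K - S) g) / g)).
  assert (Hex := ex_RInt_minus (V := R_CompleteNormedModule) _ _ _ _
                   (ex_RInt_kernel F K S g HS HF) (ex_RInt_kernel L K S g HS HL)).
  eapply Rle_trans; [apply abs_RInt_le; [lra|exact Hex]|apply RInt_le; [lra| | |]].
  - now apply ex_RInt_norm.
  - apply (ex_RInt_scal (V := R_CompleteNormedModule)).
    now exists ((Rpower K g - Rpower (K - S) g) / g).
  - intros x Hx.
    change (Rabs (F x * Rpower (K - x) (g - 1) - L x * Rpower (K - x) (g - 1))
            <= E * Rpower (K - x) (g - 1)).
    rewrite <- Rmult_minus_distr_r, Rabs_mult, (Rabs_pos_eq (Rpower _ _))
      by apply Rlt_le, Rpower_pos.
    apply Rmult_le_compat_r; [apply Rlt_le, Rpower_pos|]. apply HE. lra.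
Qed.

(* After the substitution [u = a + s t] the discrete terms are the kernel integral of the
   interpolant [phi0 s d0 + phi1 s d1]. *)
Lemma kernel_piece_error (F phi0 phi1 : R -> R) (a t K S g d0 d1 E : R) :
  0 < g -> 0 < t -> 0 < S < K ->
  (forall x, continuous F x) -> (forall s, continuous phi0 s) -> (forall s, continuous phi1 s) ->
  (forall s, 0 <= s <= S -> Rabs (F (a + s * t) - (phi0 s * d0 + phi1 s * d1)) <= E) ->
  Rabs (RInt (fun u => F u * Rpower (a + K * t - u) (g - 1)) a (a + S * t)
        - (Rpower t g * RInt (fun s => phi0 s * Rpower (K - s) (g - 1)) 0 S * d0
           + Rpower t g * RInt (fun s => phi1 s * Rpower (K - s) (g - 1)) 0 S * d1))
  <= E * (Rpower t g * ((Rpower K g - Rpower (K - S) g) / g)).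
Proof.
  intros Hg Ht HS HF H0 H1 HE.
  rewrite RInt_kernel_comp_lin by auto.
  rewrite !Rmult_assoc, <- Rmult_plus_distr_l, <- RInt_kernel_lin_comb by auto.
  rewrite <- Rmult_minus_distr_l, Rabs_mult, (Rabs_pos_eq (Rpower t g)) by apply Rlt_le, Rpower_pos.
  rewrite (Rmult_comm E), Rmult_assoc. apply Rmult_le_compat_l; [apply Rlt_le, Rpower_pos|].
  rewrite Rmult_comm.
  apply (abs_RInt_kernel_sub_le (fun s => F (a + s * t)) (fun s => phi0 s * d0 + phi1 s * d1));
    auto.
  - intros s. apply (continuous_comp (fun s => a + s * t) F); [|apply HF].
    apply (is_derive_continuous _ _ t). auto_derive; auto. ring.
  - intros s. apply (continuous_plus (K := R_AbsRing) (V := R_NormedModule)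
                      (fun s => phi0 s * d0) (fun s => phi1 s * d1)).
    + apply (continuous_mult (K := R_AbsRing) phi0 (fun _ => d0));
        [apply H0|apply continuous_const].
    + apply (continuous_mult (K := R_AbsRing) phi1 (fun _ => d1));
        [apply H1|apply continuous_const].
Qed.

Lemma is_RInt_gen_kernel a c g : 0 < g -> a < c ->
  is_RInt_gen (fun u => Rpower (c - u) (g - 1)) (at_point a) (at_left c) (Rpower (c - a) g / g).
Proof.
  intros Hg Hac.
  replace (Rpower (c - a) g / g) with (0 - (- / g * Rpower (c - a) g)) by (field; lra).
  apply (is_RInt_gen_antiderivative _ _ _ (fun t => - / g * Rpower (c - t) g) (fun u => u < c)).
  - intros x y z Hx Hz Hy. lra.
  - exact Hac.
  - now exists (mkposreal 1 Rlt_0_1).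
  - intros x Hx. now apply is_derive_kernel_primitive.
  - intros x Hx. now apply continuous_Rpower_sub.
  - apply (filterlim_at_point (fun t => - / g * Rpower (c - t) g)).
  - apply (filterlim_mult_0 (at_left c)), filterlim_Rpower_sub, Hg.
Qed.

Lemma is_RInt_gen_kernel_bounded (h : R -> R) a c g B : 0 < g -> a < c ->
  (forall u, a <= u < c -> continuous h u) -> (forall u, a <= u < c -> Rabs (h u) <= B) ->
  exists I, is_RInt_gen (fun u => h u * Rpower (c - u) (g - 1)) (at_point a) (at_left c) I /\
            Rabs I <= B * (Rpower (c - a) g / g).
Proof.
  intros Hg Hac Hh HB.
  set (D u := a <= u < c).
  assert (Hdom : forall u, D u ->
            Rabs (h u * Rpower (c - u) (g - 1)) <= B * Rpower (c - u) (g - 1)).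
  { intros u Hu. rewrite Rabs_mult, (Rabs_pos_eq (Rpower _ _)) by apply Rlt_le, Rpower_pos.
    apply Rmult_le_compat_r; [apply Rlt_le, Rpower_pos|]. now apply HB. }
  assert (Hab : filter_prod (at_point a) (at_left c) (fun ab => fst ab = a /\ a < snd ab < c)).
  { apply (Filter_prod _ _ _ (fun x => x = a) (fun y => a < y < c)); [reflexivity| |].
    - now apply at_left_between.
    - now intros x y -> Hy. }
  edestruct (ex_RInt_gen_dominated (fun u => h u * Rpower (c - u) (g - 1))
              (fun u => B * Rpower (c - u) (g - 1)) (fun t => B * (- / g * Rpower (c - t) g)) D
              (at_point a) (at_left c)) as [I HI].
  - intros x y z Hx Hz Hy. unfold D in *. lra.
  - intros u [Hu1 Hu2]. apply (continuous_mult h); [now apply Hh|now apply continuous_Rpower_sub].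
  - intros x [_ Hx]. now apply is_derive_scal, is_derive_kernel_primitive.
  - intros x [_ Hx]. apply (continuous_mult (fun _ => B)); [apply continuous_const|].
    now apply continuous_Rpower_sub.
  - exact Hdom.
  - unfold D. now split; [apply Rle_refl|].
  - eapply filter_imp; [|exact (at_left_between a c Hac)]. unfold D. intros u Hu. lra.
  - apply (filterlim_at_point (fun t => B * (- / g * Rpower (c - t) g))).
  - apply (filterlim_mult_0 (at_left c)), (filterlim_mult_0 (at_left c)), filterlim_Rpower_sub, Hg.
  - exists I. split; [exact HI|].
    assert (HW := is_RInt_gen_scal (Fa := at_point a) (Fb := at_left c) _ B _
                    (is_RInt_gen_kernel a c g Hg Hac)).
    assert (Hle : filter_prod (at_point a) (at_left c) (fun ab => fst ab <= snd ab))
      by (revert Hab; apply filter_imp; intros ab [-> Hb]; lra).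
    assert (Hdom' : filter_prod (at_point a) (at_left c)
              (fun ab => forall x, fst ab <= x <= snd ab ->
              Rabs (h x * Rpower (c - x) (g - 1)) <= B * Rpower (c - x) (g - 1))).
    { revert Hab; apply filter_imp. intros ab [-> Hb] x Hx. apply Hdom. unfold D. lra. }
    exact (RInt_gen_norm (fun u => h u * Rpower (c - u) (g - 1))
             (fun u => B * Rpower (c - u) (g - 1)) _ _ Hle Hdom' HI HW).
Qed.

Lemma is_RInt_gen_kernel_moment a c m g : 0 < g -> a < c ->
  is_RInt_gen (fun u => (u - m) * Rpower (c - u) (g - 1)) (at_point a) (at_left c)
    ((c - m) * (Rpower (c - a) g / g) - Rpower (c - a) (g + 1) / (g + 1)).
Proof.
  intros Hg Hac.
  set (G t := - (c - m) / g * Rpower (c - t) g + / (g + 1) * Rpower (c - t) (g + 1)).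
  replace ((c - m) * (Rpower (c - a) g / g) - Rpower (c - a) (g + 1) / (g + 1)) with (0 - G a)
    by (unfold G; field; lra).
  apply (is_RInt_gen_antiderivative _ _ _ G (fun u => u < c)).
  - intros x y z Hx Hz Hy. lra.
  - exact Hac.
  - now exists (mkposreal 1 Rlt_0_1).
  - intros x Hx. unfold G.
    replace ((x - m) * Rpower (c - x) (g - 1))
      with (- (c - m) / g * - (g * Rpower (c - x) (g - 1))
            + / (g + 1) * - ((g + 1) * Rpower (c - x) (g + 1 - 1))).
    + apply (is_derive_plus (fun t => - (c - m) / g * Rpower (c - t) g)
               (fun t => / (g + 1) * Rpower (c - t) (g + 1)));
        apply is_derive_scal, is_derive_Rpower_sub; exact Hx.
    + replace (g + 1 - 1) with ((g - 1) + 1) by ring.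
      rewrite Rpower_plus, Rpower_1 by lra. field. lra.
  - intros x Hx. apply (continuous_mult (fun u => u - m)).
    + apply (is_derive_continuous _ _ 1). auto_derive; auto.
    + now apply continuous_Rpower_sub.
  - apply (filterlim_at_point G).
  - rewrite <- (Rplus_0_r 0). unfold G.
    apply (filterlim_comp_2 (G := locally 0) (H := locally 0)
      (fun t => - (c - m) / g * Rpower (c - t) g) (fun t => / (g + 1) * Rpower (c - t) (g + 1))
      Rplus).
    + apply (filterlim_mult_0 (at_left c)), filterlim_Rpower_sub, Hg.
    + apply (filterlim_mult_0 (at_left c)), filterlim_Rpower_sub. lra.
    + exact (filterlim_plus (K := R_AbsRing) (V := R_NormedModule) 0 0).
Qed.

Lemma is_RInt_gen_Rpower_0 X g : 0 < g -> 0 < X ->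
  is_RInt_gen (fun s => Rpower s (g - 1)) (at_right 0) (at_point X) (Rpower X g / g).
Proof.
  intros Hg HX.
  replace (Rpower X g / g) with (/ g * Rpower X g - 0) by (field; lra).
  apply (is_RInt_gen_antiderivative _ _ _ (fun t => / g * Rpower t g) (fun u => 0 < u)).
  - intros x y z Hx Hz Hy. lra.
  - now exists (mkposreal 1 Rlt_0_1).
  - exact HX.
  - intros x Hx. replace (Rpower x (g - 1)) with (/ g * (g * Rpower x (g - 1))) by (field; lra).
    now apply is_derive_scal, is_derive_Rpower.
  - intros x Hx. eapply is_derive_continuous, is_derive_Rpower, Hx.
  - apply (filterlim_mult_0 (at_right 0)), filterlim_Rpower_0, Hg.
  - apply (filterlim_at_point (fun t => / g * Rpower t g)).
Qed.

(** * The truncation error *)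

Lemma sum_f_R0_rev (f : nat -> R) n : sum_f_R0 (fun l => f (n - l)%nat) n = sum_f_R0 f n.
Proof.
  induction n as [|n IH]; [reflexivity|].
  rewrite decomp_sum by lia. simpl pred. rewrite tech5, Nat.sub_0_r, <- IH.
  rewrite (sum_eq (fun i => f (S n - S i)%nat) (fun i => f (n - i)%nat)) by (intros; f_equal).
  ring.
Qed.

Section Truncation_error.
Variables (alpha tau : R) (k : nat) (p p1 p2 p3 p4 : R -> R) (M : R).
Hypothesis Halpha : 1 < alpha < 2.
Hypothesis Htau : 0 < tau.
Hypothesis Hk : (1 <= k)%nat.
Hypothesis HC : C4_on 0 (INR (k + 1) * tau) p p1 p2 p3 p4.
Hypothesis HM : forall x, 0 <= x <= INR (k + 1) * tau -> Rabs (p4 x) <= M.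

Let g := 2 - alpha.
Let sg := sigma_of alpha.
Let K := INR k + sg.
Let c := INR k * tau + sg * tau.
Let T1 := INR (k + 1) * tau.
Let d (j : nat) := dt2 p (p1 0) tau j.
Let P2 := extend_on 0 T1 p2.
(* [c] is t_{k+sigma} = K tau, [d j] is delta_t^2 p^j, [P2] is p'' made continuous on R, and
   the kernel (t_{k+sigma} - u)^(1 - alpha) is written (c - u)^(g - 1). *)

Lemma g_bounds : 0 < g < 1.
Proof. unfold g. lra. Qed.

Lemma sigma_eq : sg = g / 2.
Proof. unfold sg, g, sigma_of. field. Qed.

Lemma k_ge_1 : 1 <= INR k.
Proof. apply (le_INR 1), Hk. Qed.

Lemma T1_eq : T1 = INR k * tau + tau.
Proof. unfold T1. rewrite plus_INR. simpl. ring. Qed.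

Lemma M_nonneg : 0 <= M.
Proof.
  assert (H0 : 0 <= 0 <= T1) by (rewrite T1_eq; generalize k_ge_1; nra).
  generalize (HM 0 H0) (Rabs_pos (p4 0)). lra.
Qed.

Lemma P2_continuous x : continuous P2 x.
Proof.
  apply extend_on_continuous; [rewrite T1_eq; generalize k_ge_1; nra|].
  destruct HC as (_ & _ & D2 & _). eapply deriv_on_cont_on, D2.
Qed.

Lemma P2_eq x : 0 <= x <= T1 -> P2 x = p2 x.
Proof. apply extend_on_eq. Qed.

Lemma ex_RInt_caputo_integrand a b : 0 <= a <= b -> b < c ->
  ex_RInt (fun u => P2 u * Rpower (c - u) (g - 1)) a b.
Proof.
  intros Hab Hb. apply (ex_RInt_continuous (V := R_CompleteNormedModule)). intros z Hz.
  rewrite Rmin_left, Rmax_right in Hz by lra.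
  apply (continuous_mult P2); [apply P2_continuous|apply continuous_Rpower_sub; lra].
Qed.

Lemma dt2_0_error : Rabs (d 0 - (p2 0 + p3 0 * tau / 3)) <= M * tau ^ 2 / 12.
Proof.
  assert (H := first_step_error 0 T1 M p p1 p2 p3 p4 HC HM 0 tau Htau ltac:(lra)
                 ltac:(rewrite T1_eq; generalize k_ge_1; nra)).
  rewrite Rplus_0_l in H. unfold d, dt2, dt. simpl INR. now rewrite Rmult_1_l, Rmult_0_l.
Qed.

Lemma dt2_error j : (1 <= j <= k)%nat -> Rabs (d j - p2 (INR j * tau)) <= M * tau ^ 2 / 12.
Proof.
  intros Hj. destruct j as [|j]; [lia|].
  assert (Hjk : INR (S j) <= INR k) by (apply le_INR; lia).
  assert (Hj1 : 1 <= INR (S j)) by (apply (le_INR 1); lia).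
  assert (H := second_difference_error 0 T1 M p p1 p2 p3 p4 HC HM (INR (S j) * tau) tau Htau
                 ltac:(nra) ltac:(rewrite T1_eq; nra)).
  unfold d, dt2, dt.
  replace (S j + 1 - 1)%nat with (S j) by lia. replace (S j - 1)%nat with j by lia.
  rewrite plus_INR. replace (INR j) with (INR (S j) - 1) by (rewrite S_INR; ring). simpl (INR 1).
  replace ((INR (S j) + 1) * tau) with (INR (S j) * tau + tau) by ring.
  now replace ((INR (S j) - 1) * tau) with (INR (S j) * tau - tau) by ring.
Qed.

Lemma first_piece_pointwise s : 0 <= s <= 1 / 2 ->
  Rabs (P2 (0 + s * tau) - ((1 - s) * (3 / 2 * d 0) + (s - 1 / 3) * (3 / 2 * d 1)))
  <= 5 / 6 * M * tau ^ 2.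
Proof.
  intros Hs. assert (Hk1 := k_ge_1). assert (HT := T1_eq). assert (HM0 := M_nonneg).
  rewrite Rplus_0_l, P2_eq by nra.
  assert (E0 : Rabs (d 0 - (p2 0 + p3 0 * (tau / 3 - 0))) <= M * tau ^ 2 / 12)
    by (replace (p3 0 * (tau / 3 - 0)) with (p3 0 * tau / 3) by field; exact dt2_0_error).
  assert (E1 := dt2_error 1 ltac:(lia)). simpl INR in E1. rewrite Rmult_1_l in E1.
  assert (H := interpolation_error 0 T1 M p p1 p2 p3 p4 HC HM 0 (tau / 3) tau (s * tau)
                 (3 / 2 * (s - 1 / 3)) (d 0) (d 1) _ _ ltac:(nra) ltac:(nra) ltac:(nra)
                 ltac:(field) E0 E1).
  replace ((1 - s) * (3 / 2 * d 0) + (s - 1 / 3) * (3 / 2 * d 1))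
    with ((1 - 3 / 2 * (s - 1 / 3)) * d 0 + 3 / 2 * (s - 1 / 3) * d 1) by field.
  eapply Rle_trans; [exact H|].
  rewrite !Rminus_0_r.
  assert (Rabs (3 / 2 * (s - 1 / 3)) <= 1 / 2) by (apply Rabs_le; lra).
  assert (Rabs (1 - 3 / 2 * (s - 1 / 3)) <= 3 / 2) by (apply Rabs_le; lra).
  assert (0 <= M * tau ^ 2) by (apply Rmult_le_pos; [lra|apply pow2_ge_0]).
  assert (M * (s * tau) ^ 2 <= M * tau ^ 2 / 4).
  { replace (M * (s * tau) ^ 2) with (s ^ 2 * (M * tau ^ 2)) by ring.
    assert (s ^ 2 <= 1 / 4) by nra. nra. }
  nra.
Qed.

Lemma middle_piece_pointwise j s : (2 <= j <= k)%nat -> 0 <= s <= 1 ->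
  Rabs (P2 ((INR j - 3 / 2) * tau + s * tau) - ((3 / 2 - s) * d (j - 1)%nat + (s - 1 / 2) * d j))
  <= 5 / 6 * M * tau ^ 2.
Proof.
  intros Hj Hs. assert (HT := T1_eq). assert (HM0 := M_nonneg).
  assert (Hjk : INR j <= INR k) by (apply le_INR; lia).
  assert (Hj2 : 2 <= INR j) by (apply (le_INR 2); lia).
  set (y := (INR j - 1) * tau).
  replace ((INR j - 3 / 2) * tau + s * tau) with (y + (s - 1 / 2) * tau) by (unfold y; field).
  rewrite P2_eq by (unfold y; split; nra).
  assert (E0 := dt2_error (j - 1) ltac:(lia)).
  rewrite minus_INR in E0 by lia. simpl (INR 1) in E0. fold y in E0.
  replace (p2 y) with (p2 y + p3 y * (y - y)) in E0 by ring.
  assert (H := interpolation_error 0 T1 M p p1 p2 p3 p4 HC HM y y (INR j * tau)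
                 (y + (s - 1 / 2) * tau)
                 (s - 1 / 2) (d (j - 1)%nat) (d j) _ _ ltac:(unfold y; split; nra)
                 ltac:(split; nra) ltac:(unfold y; split; nra) ltac:(unfold y; field)
                 E0 (dt2_error j ltac:(lia))).
  replace ((3 / 2 - s) * d (j - 1)%nat + (s - 1 / 2) * d j)
    with ((1 - (s - 1 / 2)) * d (j - 1)%nat + (s - 1 / 2) * d j) by field.
  eapply Rle_trans; [exact H|].
  replace (y + (s - 1 / 2) * tau - y) with ((s - 1 / 2) * tau) by ring.
  replace (INR j * tau - y) with tau by (unfold y; ring).
  assert (Rabs (s - 1 / 2) <= 1 / 2) by (apply Rabs_le; lra).
  assert (Rabs (1 - (s - 1 / 2)) <= 3 / 2) by (apply Rabs_le; lra).
  assert (0 <= M * tau ^ 2) by (apply Rmult_le_pos; [lra|apply pow2_ge_0]).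
  assert (M * ((s - 1 / 2) * tau) ^ 2 <= M * tau ^ 2 / 4).
  { replace (M * ((s - 1 / 2) * tau) ^ 2) with ((s - 1 / 2) ^ 2 * (M * tau ^ 2)) by ring.
    assert ((s - 1 / 2) ^ 2 <= 1 / 4) by nra. nra. }
  nra.
Qed.

Lemma coef_a_1 : coef_a alpha tau k 1
  = 3 / 2 * Rpower tau g * RInt (fun s => (s - 1 / 3) * Rpower (K - s) (g - 1)) 0 (1 / 2).
Proof.
  unfold coef_a, K, g, sg. simpl Nat.eqb. cbv zeta.
  now replace (2 - alpha - 1) with (1 - alpha) by ring.
Qed.

Lemma coef_c_k : coef_c alpha tau k k
  = 3 / 2 * Rpower tau g * RInt (fun s => (1 - s) * Rpower (K - s) (g - 1)) 0 (1 / 2).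
Proof.
  unfold coef_c, K, g, sg. rewrite Nat.ltb_irrefl. cbv zeta.
  now replace (2 - alpha - 1) with (1 - alpha) by ring.
Qed.

Lemma coef_a_ne_1 j : j <> 1%nat -> coef_a alpha tau k j
  = Rpower tau g * RInt (fun s => (s - 1 / 2) * Rpower (K - INR j + 3 / 2 - s) (g - 1)) 0 1.
Proof.
  intros Hj. unfold coef_a, K, g, sg. rewrite (proj2 (Nat.eqb_neq j 1) Hj). cbv zeta.
  now replace (2 - alpha - 1) with (1 - alpha) by ring.
Qed.

Lemma coef_b_ne_k j : j <> k -> coef_b alpha tau k j
  = Rpower tau g * RInt (fun s => (3 / 2 - s) * Rpower (K - INR j + 1 / 2 - s) (g - 1)) 0 1.
Proof.
  intros Hj. unfold coef_b, K, g, sg. rewrite (proj2 (Nat.eqb_neq j k) Hj). cbv zeta.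
  now replace (2 - alpha - 1) with (1 - alpha) by ring.
Qed.

Lemma coef_b_k : coef_b alpha tau k k = Rpower ((sg + 1 / 2) * tau) g / g.
Proof.
  assert (Hg := g_bounds). assert (Hsg := sigma_eq).
  unfold coef_b. rewrite Nat.eqb_refl. cbv zeta. fold sg.
  assert (Hb : is_RInt_gen (fun s => Rpower s (1 - alpha)) (at_right 0) (at_point (sg + 1 / 2))
                 (Rpower (sg + 1 / 2) g / g)).
  { replace (1 - alpha) with (g - 1) by (unfold g; ring). apply is_RInt_gen_Rpower_0; lra. }
  rewrite (is_RInt_gen_unique _ _ Hb). fold g.
  rewrite <- Rpower_mult_distr by lra. field. lra.
Qed.

Lemma coef_c_lt l : (l < k)%nat ->
  coef_c alpha tau k l = coef_a alpha tau k (k - l) + coef_b alpha tau k (k - l).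
Proof. intros Hl. unfold coef_c. now rewrite (proj2 (Nat.ltb_lt l k) Hl). Qed.

Lemma first_piece_error :
  Rabs (RInt (fun u => P2 u * Rpower (c - u) (g - 1)) 0 (tau / 2)
        - (coef_a alpha tau k 1 * d 1 + coef_c alpha tau k k * d 0))
  <= 5 / 6 * M * tau ^ 2 * (Rpower tau g * ((Rpower K g - Rpower (K - 1 / 2) g) / g)).
Proof.
  assert (Hk1 := k_ge_1). assert (Hg := g_bounds). assert (Hsg := sigma_eq).
  replace c with (0 + K * tau) by (unfold c, K; ring).
  replace (tau / 2) with (0 + 1 / 2 * tau) by field.
  rewrite coef_a_1, coef_c_k.
  set (I0 := RInt (fun s => (1 - s) * Rpower (K - s) (g - 1)) 0 (1 / 2)).
  set (I1 := RInt (fun s => (s - 1 / 3) * Rpower (K - s) (g - 1)) 0 (1 / 2)).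
  replace (3 / 2 * Rpower tau g * I1 * d 1 + 3 / 2 * Rpower tau g * I0 * d 0)
    with (Rpower tau g * I0 * (3 / 2 * d 0) + Rpower tau g * I1 * (3 / 2 * d 1)) by ring.
  apply kernel_piece_error; try (unfold K; lra).
  - exact P2_continuous.
  - intros s. apply (is_derive_continuous _ _ (-1)). auto_derive; auto; ring.
  - intros s. apply (is_derive_continuous _ _ 1). auto_derive; auto; ring.
  - exact first_piece_pointwise.
Qed.

Lemma middle_piece_error j : (2 <= j <= k)%nat ->
  Rabs (RInt (fun u => P2 u * Rpower (c - u) (g - 1))
          ((INR j - 3 / 2) * tau) ((INR j - 1 / 2) * tau)
        - (coef_a alpha tau k j * d j + coef_b alpha tau k (j - 1) * d (j - 1)%nat))
  <= 5 / 6 * M * tau ^ 2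
     * (Rpower tau g * ((Rpower (K - INR j + 3 / 2) g - Rpower (K - INR j + 3 / 2 - 1) g) / g)).
Proof.
  intros Hj. assert (Hk1 := k_ge_1). assert (Hg := g_bounds). assert (Hsg := sigma_eq).
  assert (Hjk : INR j <= INR k) by (apply le_INR; lia).
  replace c with ((INR j - 3 / 2) * tau + (K - INR j + 3 / 2) * tau) by (unfold c, K; ring).
  replace ((INR j - 1 / 2) * tau) with ((INR j - 3 / 2) * tau + 1 * tau) by field.
  rewrite coef_a_ne_1, coef_b_ne_k by lia.
  rewrite minus_INR by lia. simpl (INR 1).
  replace (K - (INR j - 1) + 1 / 2) with (K - INR j + 3 / 2) by field.
  rewrite (Rplus_comm (_ * d j)).
  apply kernel_piece_error; try (unfold K; lra).
  - exact P2_continuous.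
  - intros s. apply (is_derive_continuous _ _ (-1)). auto_derive; auto; ring.
  - intros s. apply (is_derive_continuous _ _ 1). auto_derive; auto; ring.
  - intros s Hs. now apply middle_piece_pointwise.
Qed.

Fixpoint ab_sum (m : nat) : R :=
  match m with
  | O => 0
  | S m' => ab_sum m' + (coef_a alpha tau k m + coef_b alpha tau k m) * d m
  end.

Lemma discrete_sum_split :
  sum_f_R0 (fun l => coef_c alpha tau k l * dt2 p (p1 0) tau (k - l)) k
  = coef_c alpha tau k k * d 0 + ab_sum k.
Proof.
  transitivity (sum_f_R0 (fun j => coef_c alpha tau k (k - j) * d j) k).
  { rewrite <- sum_f_R0_rev. apply sum_eq. intros i Hi. cbv beta.
    now replace (k - (k - i))%nat with i by lia. }
  enough (H : forall m, (m <= k)%nat ->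
    sum_f_R0 (fun j => coef_c alpha tau k (k - j) * d j) m = coef_c alpha tau k k * d 0 + ab_sum m)
    by (apply H; lia).
  induction m as [|m IH]; intros Hm.
  - cbn [sum_f_R0 ab_sum]. rewrite Nat.sub_0_r. ring.
  - rewrite tech5, IH by lia. cbn [ab_sum].
    rewrite (coef_c_lt (k - S m)) by lia. replace (k - (k - S m))%nat with (S m) by lia. ring.
Qed.

Let partial_error_bound (m : nat) :=
  Rabs (RInt (fun u => P2 u * Rpower (c - u) (g - 1)) 0 ((INR m - 1 / 2) * tau)
        - (coef_c alpha tau k k * d 0 + ab_sum m - coef_b alpha tau k m * d m))
  <= 5 / 6 * M * tau ^ 2 * (Rpower tau g * ((Rpower K g - Rpower (K - INR m + 1 / 2) g) / g)).

Lemma partial_error_1 : partial_error_bound 1.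
Proof.
  unfold partial_error_bound. cbn [ab_sum]. simpl INR.
  replace ((1 - 1 / 2) * tau) with (tau / 2) by field.
  replace (K - 1 + 1 / 2) with (K - 1 / 2) by field.
  replace (coef_c alpha tau k k * d 0 + (0 + (coef_a alpha tau k 1 + coef_b alpha tau k 1) * d 1)
           - coef_b alpha tau k 1 * d 1)
    with (coef_a alpha tau k 1 * d 1 + coef_c alpha tau k k * d 0) by ring.
  apply first_piece_error.
Qed.

Lemma partial_error_succ m : (1 <= m < k)%nat ->
  partial_error_bound m -> partial_error_bound (S m).
Proof.
  unfold partial_error_bound. intros Hm IH.
  assert (Hk1 := k_ge_1). assert (Hg := g_bounds). assert (Hsg := sigma_eq).
  assert (Hmk : INR (S m) <= INR k) by (apply le_INR; lia).
  assert (Hm1 : 1 <= INR m) by (apply (le_INR 1); lia).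
  assert (P := middle_piece_error (S m) ltac:(lia)).
  replace (S m - 1)%nat with m in P by lia. rewrite S_INR in P, Hmk |- *.
  replace (INR m + 1 - 3 / 2) with (INR m - 1 / 2) in P by field.
  replace (K - (INR m + 1) + 3 / 2) with (K - INR m + 1 / 2) in P by field.
  replace (K - INR m + 1 / 2 - 1) with (K - (INR m + 1) + 1 / 2) in P by field.
  rewrite <- (RInt_Chasles (V := R_CompleteNormedModule) _ 0 ((INR m - 1 / 2) * tau))
    by (apply ex_RInt_caputo_integrand; unfold c; nra).
  change (plus ?x ?y) with (x + y). cbn [ab_sum].
  set (X := RInt (fun u => P2 u * Rpower (c - u) (g - 1)) 0 ((INR m - 1 / 2) * tau)) in *.
  set (Y := RInt (fun u => P2 u * Rpower (c - u) (g - 1))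
              ((INR m - 1 / 2) * tau) ((INR m + 1 - 1 / 2) * tau)) in *.
  replace (X + Y - (coef_c alpha tau k k * d 0
                    + (ab_sum m + (coef_a alpha tau k (S m) + coef_b alpha tau k (S m)) * d (S m))
                    - coef_b alpha tau k (S m) * d (S m)))
    with ((X - (coef_c alpha tau k k * d 0 + ab_sum m - coef_b alpha tau k m * d m))
          + (Y - (coef_a alpha tau k (S m) * d (S m) + coef_b alpha tau k m * d m))) by ring.
  eapply Rle_trans; [apply Rabs_triang|].
  eapply Rle_trans; [apply Rplus_le_compat; [exact IH|exact P]|].
  right. field. lra.
Qed.

Lemma partial_error m : (1 <= m <= k)%nat -> partial_error_bound m.
Proof.
  induction m as [|m IH]; intros Hm; [lia|].
  destruct (Nat.eq_dec m 0) as [->|Hm0]; [exact partial_error_1|].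
  apply partial_error_succ; [lia|]. apply IH. lia.
Qed.

Let aL := (INR k - 1 / 2) * tau.
Let tk := INR k * tau.
Let H := (sg + 1 / 2) * tau.

Lemma c_sub_aL : c - aL = H.
Proof. unfold c, aL, H. ring. Qed.

Lemma aL_lt_c : aL < c.
Proof. assert (Hg := g_bounds). assert (Hsg := sigma_eq). unfold aL, c. nra. Qed.

Let rho u := P2 u - p2 tk - p3 tk * (u - tk).

Lemma rho_continuous u : continuous rho u.
Proof.
  apply (continuous_minus (fun u => P2 u - p2 tk)).
  - apply (continuous_minus P2); [apply P2_continuous|apply continuous_const].
  - apply (is_derive_continuous _ _ (p3 tk)). auto_derive; auto; ring.
Qed.

Lemma abs_rho_le u : aL <= u < c -> Rabs (rho u) <= M * tau ^ 2 / 8.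
Proof.
  intros [Hu1 Hu2]. assert (Hk1 := k_ge_1). assert (Hg := g_bounds). assert (Hsg := sigma_eq).
  assert (HM0 := M_nonneg). assert (HT := T1_eq). unfold aL, c in Hu1, Hu2.
  unfold rho, tk. rewrite P2_eq by (split; nra).
  eapply Rle_trans; [apply (taylor_p2 0 T1 M p p1 p2 p3 p4 HC HM); split; nra|].
  assert (- (tau / 2) <= u - INR k * tau <= tau / 2) by (split; nra).
  assert ((u - INR k * tau) ^ 2 <= tau ^ 2 / 4) by nra.
  nra.
Qed.

Lemma last_piece_remainder : exists Ir,
  is_RInt_gen (fun u => rho u * Rpower (c - u) (g - 1)) (at_point aL) (at_left c) Ir /\
  Rabs Ir <= M * tau ^ 2 / 8 * (Rpower H g / g).
Proof.
  assert (Hg := g_bounds). rewrite <- c_sub_aL.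
  apply is_RInt_gen_kernel_bounded; [lra|exact aL_lt_c| |exact abs_rho_le].
  intros u _. apply rho_continuous.
Qed.

(* This is where the choice [sigma = 1 - alpha / 2] is used. *)
Lemma last_piece_linear_part :
  is_RInt_gen (fun u => (u - tk) * Rpower (c - u) (g - 1)) (at_point aL) (at_left c) 0.
Proof.
  assert (Hg := g_bounds). assert (Hsg := sigma_eq).
  assert (HL := is_RInt_gen_kernel_moment aL c tk g ltac:(lra) aL_lt_c).
  rewrite c_sub_aL in HL.
  replace (Rpower H (g + 1)) with (Rpower H g * H) in HL
    by (rewrite Rpower_plus, Rpower_1; [reflexivity|unfold H; nra]).
  replace (c - tk) with (g / 2 * tau) in HL by (unfold c, tk; rewrite Hsg; ring).
  unfold H in HL. rewrite Hsg in HL.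
  replace ((g / 2 * tau) * (Rpower ((g / 2 + 1 / 2) * tau) g / g)
           - Rpower ((g / 2 + 1 / 2) * tau) g * ((g / 2 + 1 / 2) * tau) / (g + 1)) with 0 in HL
    by (field; lra).
  exact HL.
Qed.

Lemma last_piece_error : exists I,
  is_RInt_gen (fun u => P2 u * Rpower (c - u) (g - 1)) (at_point aL) (at_left c) I /\
  Rabs (I - coef_b alpha tau k k * d k) <= 5 / 24 * M * tau ^ 2 * (Rpower H g / g).
Proof.
  assert (Hg := g_bounds). assert (Hk1 := k_ge_1). assert (HT := T1_eq). assert (HaL := aL_lt_c).
  destruct last_piece_remainder as [Ir [HIr BIr]].
  assert (HW := is_RInt_gen_kernel aL c g ltac:(lra) HaL). rewrite c_sub_aL in HW.
  assert (Hsum := is_RInt_gen_plus (Fa := at_point aL) (Fb := at_left c) _ _ _ _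
    (is_RInt_gen_plus _ _ _ _ HIr (is_RInt_gen_scal _ (p2 tk) _ HW))
    (is_RInt_gen_scal _ (p3 tk) _ last_piece_linear_part)).
  exists (Ir + p2 tk * (Rpower H g / g) + p3 tk * 0). split.
  - eapply is_RInt_gen_ext; [|exact Hsum].
    apply filter_forall. intros ab x _.
    change ((P2 x - p2 tk - p3 tk * (x - tk)) * Rpower (c - x) (g - 1)
            + p2 tk * Rpower (c - x) (g - 1) + p3 tk * ((x - tk) * Rpower (c - x) (g - 1))
            = P2 x * Rpower (c - x) (g - 1)). ring.
  - rewrite coef_b_k. fold H.
    replace (Ir + p2 tk * (Rpower H g / g) + p3 tk * 0 - Rpower H g / g * d k)
      with (Ir - Rpower H g / g * (d k - p2 (INR k * tau))) by (unfold tk; ring).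
    assert (E := dt2_error k ltac:(lia)).
    assert (Hp : 0 <= Rpower H g / g) by (apply Rdiv_le_0_compat; [apply Rlt_le, Rpower_pos|lra]).
    eapply Rle_trans; [apply Rabs_triang|].
    rewrite Rabs_Ropp, Rabs_mult, (Rabs_pos_eq (Rpower H g / g)) by exact Hp.
    apply (Rmult_le_compat_l (Rpower H g / g)) in E; [|exact Hp]. lra.
Qed.

Lemma is_RInt_gen_caputo_split I :
  is_RInt_gen (fun u => P2 u * Rpower (c - u) (g - 1)) (at_point aL) (at_left c) I ->
  is_RInt_gen (fun s => p2 s * Rpower (c - s) (1 - alpha)) (at_point 0) (at_left c)
    (RInt (fun u => P2 u * Rpower (c - u) (g - 1)) 0 aL + I).
Proof.
  intros HI. assert (Hg := g_bounds). assert (Hk1 := k_ge_1). assert (HT := T1_eq).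
  assert (Hsg := sigma_eq). assert (HaL := aL_lt_c).
  apply (is_RInt_gen_ext (fun u => P2 u * Rpower (c - u) (g - 1))).
  - apply (Filter_prod _ _ _ (fun a => a = 0) (fun b => 0 < b < c));
      [reflexivity|apply at_left_between; unfold c; nra|].
    intros a b -> Hb x Hx. simpl in Hx. rewrite Rmin_left, Rmax_right in Hx by lra.
    rewrite P2_eq by (rewrite HT; unfold c in Hb; nra).
    now replace (g - 1) with (1 - alpha) by (unfold g; ring).
  - apply (is_RInt_gen_Chasles (Fa := at_point 0) (Fc := at_left c) _ aL _ I); [|exact HI].
    apply is_RInt_gen_at_point, (RInt_correct (V := R_CompleteNormedModule)).
    apply ex_RInt_caputo_integrand; [unfold aL; split; nra|exact HaL].
Qed.

Lemma caputo_integral_error :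
  Rabs (RInt_gen (fun s => p2 s * Rpower (c - s) (1 - alpha)) (at_point 0) (at_left c)
        - sum_f_R0 (fun l => coef_c alpha tau k l * dt2 p (p1 0) tau (k - l)) k)
  <= M * (5 * Rpower c g / 6 * tau ^ 2
          - 5 / 8 * Rpower (sg + 1 / 2) g * Rpower tau (4 - alpha)) / g.
Proof.
  assert (Hg := g_bounds). assert (Hk1 := k_ge_1). assert (Hsg := sigma_eq).
  destruct last_piece_error as [I [HI BI]].
  rewrite (is_RInt_gen_unique _ _ (is_RInt_gen_caputo_split I HI)), discrete_sum_split.
  set (X := RInt (fun u => P2 u * Rpower (c - u) (g - 1)) 0 aL).
  assert (E := partial_error k ltac:(lia)). unfold partial_error_bound in E. fold aL X in E.
  replace (K - INR k + 1 / 2) with (sg + 1 / 2) in E by (unfold K; ring).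
  rewrite coef_b_k in E, BI. fold H in E, BI.
  replace (X + I - (coef_c alpha tau k k * d 0 + ab_sum k))
    with ((X - (coef_c alpha tau k k * d 0 + ab_sum k - Rpower H g / g * d k))
          + (I - Rpower H g / g * d k)) by ring.
  eapply Rle_trans; [apply Rabs_triang|].
  eapply Rle_trans; [apply Rplus_le_compat; [exact E|exact BI]|].
  right. unfold H.
  replace c with (K * tau) by (unfold c, K; ring).
  rewrite <- !Rpower_mult_distr by (unfold K; lra).
  replace (4 - alpha) with (g + INR 2) by (unfold g; simpl; ring).
  rewrite Rpower_plus, Rpower_pow by lra. field. lra.
Qed.

End Truncation_error.

Theorem theorem1 (alpha T : R) (N k : nat) (p p1 p2 p3 p4 : R -> R) :
  1 < alpha < 2 -> 0 < T -> (0 < N)%nat ->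
  (1 <= k)%nat -> (k <= N - 1)%nat ->
  let sigma := 1 - alpha / 2 in
  let tau := T / INR N in
  let tks := INR k * tau + sigma * tau in
  C4_on 0 (INR (k + 1) * tau) p p1 p2 p3 p4 ->
  Rabs (caputo alpha p2 tks - discrete_caputo alpha tau p (p1 0) k)
  <= / Gamma (3 - alpha) * max_abs_on 0 (INR (k + 1) * tau) p4 *
     (5 * Rpower tks (2 - alpha) / 6 * tau ^ 2
      - 5 / 8 * Rpower (sigma + 1 / 2) (2 - alpha) * Rpower tau (4 - alpha)).
Proof.
  intros Halpha HT HN Hk _ sigma tau tks HC.
  assert (Htau : 0 < tau) by (apply Rdiv_lt_0_compat; [exact HT|now apply lt_0_INR]).
  set (M := max_abs_on 0 (INR (k + 1) * tau) p4).
  assert (HM : forall x, 0 <= x <= INR (k + 1) * tau -> Rabs (p4 x) <= M).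
  { apply max_abs_on_bound; [apply Rmult_le_pos; [apply pos_INR|lra]|apply HC]. }
  assert (Hz : 0 < 2 - alpha < 1) by lra.
  assert (HG := Gamma_pos _ Hz).
  replace (3 - alpha) with (2 - alpha + 1) by ring. rewrite Gamma_succ by exact Hz.
  unfold caputo, discrete_caputo.
  rewrite <- Rmult_minus_distr_l, Rabs_mult, Rabs_pos_eq by (apply Rlt_le, Rinv_0_lt_compat, HG).
  eapply Rle_trans.
  { apply Rmult_le_compat_l; [apply Rlt_le, Rinv_0_lt_compat, HG|].
    exact (caputo_integral_error alpha tau k p p1 p2 p3 p4 M Halpha Htau Hk HC HM). }
  right. unfold tks, sigma, sigma_of. field. lra.
Qed.
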